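(* Assume Schanuel's conjecture $(S)$. Let $z$ and $w$ be complex numbers with $z,w\notin\{0,1\}$. If $z^{w}$ and $w^{z}$ are both algebraic, then either $z$ and $w$ are both rational, or $z$ and $w$ are both transcendental. In particular, assuming $(S)$: if $r,s,t$ are real numbers with $1<s<t$ and $s^{t}=t^{s}=r$, and if either (i) $r\in\mathbb{N}$ and $r\neq 16$, or (ii) $r^n$ is algebraic but irrational for every $n\in\mathbb{N}$, then $s$ and $t$ are both transcendental.
   Context: Schanuel's conjecture $(S)$: if $\alpha_1,\dots,\alpha_n\in\mathbb{C}$ are linearly independent over $\mathbb{Q}$, then the transcendence degree of $\mathbb{Q}(\alpha_1,\dots,\alpha_n,e^{\alpha_1},\dots,e^{\alpha_n})$ over $\mathbb{Q}$ is at least $n$. For complex $a\neq 0$ and $b$, the power $a^{b}$ means $e^{b\log a}$ for a fixed determination of the logarithm $\log a$ (for positive reals, the real logarithm). *)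

From Stdlib Require Import Reals QArith Qreals ZArith List.
Open Scope R_scope.

Definition CC : Type := (R * R)%type.
Definition RtoC (x : R) : CC := (x, 0).
Definition Czero : CC := RtoC 0.
Definition Cone : CC := RtoC 1.
Definition Cadd (z w : CC) : CC := (fst z + fst w, snd z + snd w).
Definition Cmul (z w : CC) : CC :=
  (fst z * fst w - snd z * snd w, fst z * snd w + snd z * fst w).
Fixpoint Cpow (z : CC) (n : nat) : CC :=
  match n with O => Cone | S m => Cmul z (Cpow z m) end.
Definition Cexp (z : CC) : CC :=
  (exp (fst z) * cos (snd z), exp (fst z) * sin (snd z)).
Definition ZtoC (c : Z) : CC := RtoC (IZR c).

Definition Crational (z : CC) : Prop := exists q : Q, z = RtoC (Q2R q).

(* z is algebraic: root of a nonzero polynomial with integer coefficients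
   (coefficient list p, p_i is the coefficient of X^i). *)
Fixpoint peval (p : list Z) (z : CC) : CC :=
  match p with
  | nil => Czero
  | c :: p' => Cadd (ZtoC c) (Cmul z (peval p' z))
  end.
Definition Calgebraic (z : CC) : Prop :=
  exists p : list Z, Exists (fun c => c <> 0%Z) p /\ peval p z = Czero.
Definition Ctranscendental (z : CC) : Prop := ~ Calgebraic z.

(* Linear independence over Q of a finite family (equivalently over Z). *)
Fixpoint lincomb (cs : list Z) (xs : list CC) : CC :=
  match cs, xs with
  | c :: cs', x :: xs' => Cadd (Cmul (ZtoC c) x) (lincomb cs' xs')
  | _, _ => Czero
  end.
Definition Q_lin_indep (xs : list CC) : Prop :=
  forall cs : list Z, length cs = length xs ->
    lincomb cs xs = Czero -> Forall (fun c => c = 0%Z) cs.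

Fixpoint monomial (xs : list CC) (e : list nat) : CC :=
  match xs, e with
  | x :: xs', k :: e' => Cmul (Cpow x k) (monomial xs' e')
  | _, _ => Cone
  end.
Fixpoint polysum (cs : list Z) (ms : list (list nat)) (xs : list CC) : CC :=
  match cs, ms with
  | c :: cs', m :: ms' => Cadd (Cmul (ZtoC c) (monomial xs m)) (polysum cs' ms' xs)
  | _, _ => Czero
  end.
(* Algebraic independence over Q: no nonzero polynomial with integer (equivalently
   rational) coefficients, written as a combination of distinct monomials,
   vanishes at xs. *)
Definition alg_indep (xs : list CC) : Prop :=
  forall (cs : list Z) (ms : list (list nat)),
    length cs = length ms -> NoDup ms ->
    Forall (fun e => length e = length xs) ms ->
    polysum cs ms xs = Czero -> Forall (fun c => c = 0%Z) cs.

(* trdeg_Q Q(gens) >= n : some n of the generators are algebraically independent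
   (for a finitely generated extension the transcendence degree is the maximal
   size of an algebraically independent subfamily of the generators). *)
Definition trdeg_ge (gens : list CC) (n : nat) : Prop :=
  exists idx : list nat, NoDup idx /\ length idx = n /\
    Forall (fun i => (i < length gens)%nat) idx /\
    alg_indep (map (fun i => nth i gens Czero) idx).

Definition Schanuel : Prop :=
  forall alphas : list CC, Q_lin_indep alphas ->
    trdeg_ge (alphas ++ map Cexp alphas) (length alphas).

(* If [z] and [w] are both algebraic and one of them is irrational, the algebraic power
   contradicts Gelfond-Schneider, which is Schanuel for [log z, w log z].  If [z] is rational
   and [w] transcendental, a power of [w] is a power of [w^z], so [w] is algebraic.  If [z] is
   algebraic irrational and [w] transcendental, the numbers [log z, log w, w log z, z log w]
   generate, together with their exponentials, a field of transcendence degree at most three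
   over the algebraic numbers (it is generated by [log z, log w, w]); according to the
   Q-linear relations among these logarithms, Schanuel for a suitable independent subfamily
   demands more.  Each such failure of algebraic independence is witnessed by an explicit
   integer polynomial.
   For the second statement: rational [s < t] with [s^t = t^s = r] make some [r^n] rational,
   and integers when [r] is an integer, and the only integer solution is [(2, 4)], [r = 16]. *)

From Stdlib Require Import Reals QArith Qreals ZArith List.
From Stdlib Require Import Znumtheory Zpow_facts Lra Lia Psatz Classical.
Open Scope R_scope.

Ltac cring :=
  unfold Cadd, Cmul, Czero, Cone, RtoC, ZtoC; simpl;
  apply injective_projections; simpl;
  repeat first [rewrite opp_IZR | rewrite mult_IZR | rewrite plus_IZR | rewrite minus_IZR];
  ring.

Ltac cfield :=
  unfold Cadd, Cmul, Czero, Cone, RtoC, ZtoC; simpl;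
  apply injective_projections; simpl;
  repeat first [rewrite opp_IZR | rewrite mult_IZR | rewrite plus_IZR | rewrite minus_IZR];
  field.

Lemma Ceq_by_relation (x y k r : CC) : r = Czero -> x = Cadd y (Cmul k r) -> x = y.
Proof. intros Hr ->; rewrite Hr; cring. Qed.

Lemma Cadd_assoc (x y z : CC) : Cadd x (Cadd y z) = Cadd (Cadd x y) z. Proof. cring. Qed.
Lemma Cmul_assoc (x y z : CC) : Cmul x (Cmul y z) = Cmul (Cmul x y) z. Proof. cring. Qed.
Lemma Cmul_add_l (x y z : CC) : Cmul (Cadd x y) z = Cadd (Cmul x z) (Cmul y z). Proof. cring. Qed.
Lemma Cmul_1_l (x : CC) : Cmul Cone x = x. Proof. cring. Qed.
Lemma Cmul_0_r (x : CC) : Cmul x Czero = Czero. Proof. cring. Qed.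
Lemma Cadd_0_l (x : CC) : Cadd Czero x = x. Proof. cring. Qed.

Lemma RtoC_add (a b : R) : RtoC (a + b) = Cadd (RtoC a) (RtoC b). Proof. cring. Qed.
Lemma RtoC_mul (a b : R) : RtoC (a * b) = Cmul (RtoC a) (RtoC b). Proof. cring. Qed.

Lemma RtoC_inj (a b : R) : RtoC a = RtoC b -> a = b.
Proof. now intros [= ->]. Qed.

Lemma RtoC_neq0 (a : R) : a <> 0 -> RtoC a <> Czero.
Proof. intros Ha H; apply Ha, RtoC_inj, H. Qed.

Lemma ZtoC_add (a b : Z) : ZtoC (a + b) = Cadd (ZtoC a) (ZtoC b).
Proof. unfold ZtoC; rewrite plus_IZR; apply RtoC_add. Qed.

Lemma ZtoC_mul (a b : Z) : ZtoC (a * b) = Cmul (ZtoC a) (ZtoC b).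
Proof. unfold ZtoC; rewrite mult_IZR; apply RtoC_mul. Qed.

Lemma IZR_neq0 (a : Z) : a <> 0%Z -> IZR a <> 0.
Proof. apply not_0_IZR. Qed.

Lemma ZtoC_neq0 (a : Z) : a <> 0%Z -> ZtoC a <> Czero.
Proof. intros Ha; apply RtoC_neq0, IZR_neq0, Ha. Qed.

Lemma Cmul_integral (x y : CC) : Cmul x y = Czero -> x = Czero \/ y = Czero.
Proof.
  destruct x as [a b], y as [c d]; unfold Cmul, Czero, RtoC; simpl.
  intros [= H1 H2].
  assert (Hp : (a * a + b * b) * (c * c + d * d) = 0) by nra.
  apply Rmult_integral in Hp as [Hp | Hp].
  - left; assert (a = 0) by nra; assert (b = 0) by nra; subst; reflexivity.
  - right; assert (c = 0) by nra; assert (d = 0) by nra; subst; reflexivity.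
Qed.

Lemma Cmul_neq0 (x y : CC) : x <> Czero -> y <> Czero -> Cmul x y <> Czero.
Proof. intros Hx Hy H; apply Cmul_integral in H as [H | H]; auto. Qed.

Lemma Cmul_cancel_r (x y l : CC) : l <> Czero -> Cmul x l = Cmul y l -> x = y.
Proof.
  intros Hl H.
  assert (Hd : Cmul (Cadd x (Cmul (ZtoC (-1)) y)) l = Czero).
  { apply (Ceq_by_relation _ _ (ZtoC 0) Czero); [reflexivity|].
    transitivity (Cadd (Cmul x l) (Cmul (ZtoC (-1)) (Cmul y l))); [cring|].
    rewrite H; cring. }
  apply Cmul_integral in Hd as [Hd | Hd]; [|contradiction].
  apply (Ceq_by_relation _ _ Cone _ Hd); cring.
Qed.

Lemma Cpow_add (z : CC) (m n : nat) : Cpow z (m + n) = Cmul (Cpow z m) (Cpow z n).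
Proof.
  induction m as [|m IH]; simpl.
  - now rewrite Cmul_1_l.
  - now rewrite IH, Cmul_assoc.
Qed.

Lemma Cpow_neq0 (x : CC) (n : nat) : x <> Czero -> Cpow x n <> Czero.
Proof.
  intros Hx; induction n as [|n IH]; simpl.
  - apply RtoC_neq0; lra.
  - apply Cmul_neq0; auto.
Qed.

Lemma RtoC_pow (x : R) (n : nat) : RtoC (x ^ n) = Cpow (RtoC x) n.
Proof. induction n as [|n IH]; simpl; [reflexivity|]. now rewrite RtoC_mul, IH. Qed.

Lemma ZtoC_pow (c : Z) (n : nat) : ZtoC (c ^ Z.of_nat n) = Cpow (ZtoC c) n.
Proof. unfold ZtoC; rewrite <- pow_IZR; apply RtoC_pow. Qed.

Lemma Cexp_add (x y : CC) : Cexp (Cadd x y) = Cmul (Cexp x) (Cexp y).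
Proof.
  destruct x as [a b], y as [c d]; unfold Cexp, Cadd, Cmul; simpl.
  rewrite exp_plus, cos_plus, sin_plus; f_equal; ring.
Qed.

Lemma Cexp_0 : Cexp Czero = Cone.
Proof. unfold Cexp, Czero, Cone, RtoC; simpl; rewrite exp_0, cos_0, sin_0; f_equal; ring. Qed.

Lemma Cexp_INR_mul (x : CC) (n : nat) : Cexp (Cmul (RtoC (INR n)) x) = Cpow (Cexp x) n.
Proof.
  induction n as [|n IH].
  - replace (Cmul (RtoC (INR 0)) x) with Czero by cring; apply Cexp_0.
  - replace (Cmul (RtoC (INR (S n))) x) with (Cadd x (Cmul (RtoC (INR n)) x))
      by (rewrite S_INR; cring).
    now rewrite Cexp_add, IH.
Qed.

Lemma Cexp_RtoC (a : R) : Cexp (RtoC a) = RtoC (exp a).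
Proof. unfold Cexp, RtoC; simpl; rewrite cos_0, sin_0; f_equal; ring. Qed.

Lemma Cexp_neq0 (x : CC) : Cexp x <> Czero.
Proof.
  destruct x as [a b]; unfold Cexp, Czero, RtoC; simpl; intros [= H1 H2].
  pose proof (exp_pos a); pose proof (sin2_cos2 b); unfold Rsqr in *.
  apply Rmult_integral in H1 as [H1 | H1]; apply Rmult_integral in H2 as [H2 | H2]; nra.
Qed.

Lemma Cexp_neq1_log_neq0 (l : CC) : Cexp l <> Cone -> l <> Czero.
Proof. intros H ->; apply H, Cexp_0. Qed.

(** * Polynomial expressions and algebraic dependence *)

Inductive pexpr :=
  | PConst (c : Z) | PVar (i : nat) | PAdd (a b : pexpr) | PMul (a b : pexpr).

Fixpoint pexpr_eval (f : nat -> CC) (e : pexpr) : CC :=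
  match e with
  | PConst c => ZtoC c
  | PVar i => f i
  | PAdd a b => Cadd (pexpr_eval f a) (pexpr_eval f b)
  | PMul a b => Cmul (pexpr_eval f a) (pexpr_eval f b)
  end.

Fixpoint pexpr_vars (e : pexpr) : list nat :=
  match e with
  | PConst _ => nil
  | PVar i => i :: nil
  | PAdd a b | PMul a b => pexpr_vars a ++ pexpr_vars b
  end.

Lemma pexpr_eval_ext (f g : nat -> CC) (e : pexpr) :
  (forall v, In v (pexpr_vars e) -> f v = g v) -> pexpr_eval f e = pexpr_eval g e.
Proof.
  induction e; simpl; intros H; auto;
    rewrite IHe1, IHe2; auto; intros; apply H, in_or_app; auto.
Qed.

Fixpoint monomial_at (f : nat -> CC) (m : list nat) : CC :=
  match m with
  | nil => Cone
  | k :: m' => Cmul (Cpow (f O) k) (monomial_at (fun i => f (S i)) m')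
  end.

Definition terms_eval (f : nat -> CC) (l : list (Z * list nat)) : CC :=
  fold_right (fun p acc => Cadd (Cmul (ZtoC (fst p)) (monomial_at f (snd p))) acc) Czero l.

Lemma monomial_monomial_at (xs : list CC) (m : list nat) : length m = length xs ->
  monomial xs m = monomial_at (fun i => nth i xs Czero) m.
Proof.
  revert m; induction xs; intros [|k m] H; simpl in *; try discriminate; auto.
  rewrite IHxs by lia; reflexivity.
Qed.

Lemma polysum_terms_eval (xs : list CC) (l : list (Z * list nat)) :
  (forall p, In p l -> length (snd p) = length xs) ->
  polysum (map fst l) (map snd l) xs = terms_eval (fun i => nth i xs Czero) l.
Proof.
  induction l as [|[c m] l IH]; intros H; simpl; auto.
  rewrite IH by (intros; apply H; simpl; auto).
  rewrite monomial_monomial_at by (apply (H (c, m)); simpl; auto); reflexivity.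
Qed.

Lemma terms_eval_app (f : nat -> CC) (l1 l2 : list (Z * list nat)) :
  terms_eval f (l1 ++ l2) = Cadd (terms_eval f l1) (terms_eval f l2).
Proof.
  induction l1; simpl; [now rewrite Cadd_0_l|].
  now rewrite IHl1, Cadd_assoc.
Qed.

Lemma terms_eval_zero (f : nat -> CC) (l : list (Z * list nat)) :
  Forall (fun c => c = 0%Z) (map fst l) -> terms_eval f l = Czero.
Proof.
  induction l as [|[c m] l IH]; simpl; intros H; auto.
  inversion H; subst; rewrite IH by auto; cring.
Qed.

Fixpoint unit_exponent (k i : nat) : list nat :=
  match k, i with
  | O, _ => nil
  | S k', O => 1%nat :: repeat O k'
  | S k', S i' => O :: unit_exponent k' i'
  end.

Fixpoint exponent_add (a b : list nat) : list nat :=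
  match a, b with
  | x :: a', y :: b' => (x + y)%nat :: exponent_add a' b'
  | _, _ => nil
  end.

Lemma monomial_at_zero (f : nat -> CC) (k : nat) : monomial_at f (repeat O k) = Cone.
Proof. revert f; induction k; intros f; simpl; auto. rewrite IHk; cring. Qed.

Lemma monomial_at_unit (f : nat -> CC) (k i : nat) :
  (i < k)%nat -> monomial_at f (unit_exponent k i) = f i.
Proof.
  revert f i; induction k; intros f i H; [lia|].
  destruct i; simpl.
  - rewrite monomial_at_zero; cring.
  - rewrite IHk by lia; cring.
Qed.

Lemma monomial_at_add (f : nat -> CC) (a b : list nat) : length a = length b ->
  monomial_at f (exponent_add a b) = Cmul (monomial_at f a) (monomial_at f b).
Proof.
  revert f b; induction a; intros f [|y b] H; simpl in *; try discriminate.
  - cring.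
  - rewrite IHa, Cpow_add by lia; cring.
Qed.

Lemma length_unit_exponent (k i : nat) : length (unit_exponent k i) = k.
Proof. revert i; induction k; intros [|i]; simpl; auto. now rewrite repeat_length. Qed.

Lemma length_exponent_add (a b : list nat) :
  length a = length b -> length (exponent_add a b) = length a.
Proof. revert b; induction a; intros [|y b] H; simpl in *; try discriminate; auto. Qed.

Definition terms_mul (l1 l2 : list (Z * list nat)) : list (Z * list nat) :=
  flat_map (fun p => map (fun q => ((fst p * fst q)%Z, exponent_add (snd p) (snd q))) l2) l1.

Lemma terms_eval_mul (f : nat -> CC) (k : nat) (l1 l2 : list (Z * list nat)) :
  (forall p, In p l1 -> length (snd p) = k) -> (forall p, In p l2 -> length (snd p) = k) ->
  terms_eval f (terms_mul l1 l2) = Cmul (terms_eval f l1) (terms_eval f l2).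
Proof.
  intros H1 H2; induction l1 as [|[c m] l1 IH]; simpl; [cring|].
  unfold terms_mul in *; simpl.
  rewrite terms_eval_app, IH, Cmul_add_l by (intros; apply H1; simpl; auto).
  f_equal.
  assert (Hm : length m = k) by (apply (H1 (c, m)); simpl; auto).
  clear IH H1; induction l2 as [|[c2 m2] l2 IH2]; simpl; [cring|].
  rewrite IH2 by (intros; apply H2; simpl; auto).
  rewrite ZtoC_mul, monomial_at_add; [cring|].
  rewrite Hm; symmetry; apply (H2 (c2, m2)); simpl; auto.
Qed.

Fixpoint expand (k : nat) (e : pexpr) : list (Z * list nat) :=
  match e with
  | PConst c => (c, repeat O k) :: nil
  | PVar i => (1%Z, unit_exponent k i) :: nil
  | PAdd a b => expand k a ++ expand k b
  | PMul a b => terms_mul (expand k a) (expand k b)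
  end.

Lemma expand_length (k : nat) (e : pexpr) (p : Z * list nat) :
  In p (expand k e) -> length (snd p) = k.
Proof.
  revert p; induction e; simpl; intros p Hp.
  - destruct Hp as [<- | []]; apply repeat_length.
  - destruct Hp as [<- | []]; apply length_unit_exponent.
  - apply in_app_or in Hp as [Hp | Hp]; auto.
  - apply in_flat_map in Hp as [p1 [H1 H2]].
    apply in_map_iff in H2 as [q [<- H3]]; simpl.
    rewrite length_exponent_add; rewrite IHe1 by auto; auto; now rewrite IHe2.
Qed.

Lemma terms_eval_expand (k : nat) (e : pexpr) (f : nat -> CC) :
  (forall v, In v (pexpr_vars e) -> (v < k)%nat) ->
  terms_eval f (expand k e) = pexpr_eval f e.
Proof.
  induction e; simpl; intros H.
  - rewrite monomial_at_zero; cring.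
  - rewrite monomial_at_unit by auto; cring.
  - rewrite terms_eval_app, IHe1, IHe2; auto; intros; apply H, in_or_app; auto.
  - rewrite (terms_eval_mul f k) by (intros; eapply expand_length; eauto).
    rewrite IHe1, IHe2; auto; intros; apply H, in_or_app; auto.
Qed.

(* Merging terms with equal exponents makes the monomials distinct, as [alg_indep] requires. *)

Fixpoint insert_term (c : Z) (m : list nat) (l : list (Z * list nat)) : list (Z * list nat) :=
  match l with
  | nil => (c, m) :: nil
  | (c', m') :: l' =>
      if list_eq_dec Nat.eq_dec m m' then ((c + c')%Z, m') :: l'
      else (c', m') :: insert_term c m l'
  end.

Definition collect_terms (l : list (Z * list nat)) : list (Z * list nat) :=
  fold_right (fun p acc => insert_term (fst p) (snd p) acc) nil l.

Lemma terms_eval_insert (f : nat -> CC) (c : Z) (m : list nat) (l : list (Z * list nat)) :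
  terms_eval f (insert_term c m l) = Cadd (Cmul (ZtoC c) (monomial_at f m)) (terms_eval f l).
Proof.
  induction l as [|[c' m'] l IH]; simpl; auto.
  destruct (list_eq_dec Nat.eq_dec m m'); simpl.
  - subst; rewrite ZtoC_add; cring.
  - rewrite IH; cring.
Qed.

Lemma terms_eval_collect (f : nat -> CC) (l : list (Z * list nat)) :
  terms_eval f (collect_terms l) = terms_eval f l.
Proof. induction l; simpl; auto. now rewrite terms_eval_insert, IHl. Qed.

Lemma in_insert_term (c : Z) (m x : list nat) (l : list (Z * list nat)) :
  In x (map snd (insert_term c m l)) -> x = m \/ In x (map snd l).
Proof.
  induction l as [|[c' m'] l IH]; simpl.
  - intros [H | []]; auto.
  - destruct (list_eq_dec Nat.eq_dec m m'); simpl; intros [H | H]; auto.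
    apply IH in H as [H | H]; auto.
Qed.

Lemma NoDup_insert_term (c : Z) (m : list nat) (l : list (Z * list nat)) :
  NoDup (map snd l) -> NoDup (map snd (insert_term c m l)).
Proof.
  induction l as [|[c' m'] l IH]; simpl; intros H.
  - repeat constructor; auto.
  - inversion H; subst; destruct (list_eq_dec Nat.eq_dec m m'); simpl; constructor; auto.
    intros Hin; apply in_insert_term in Hin as [Hin | Hin]; auto.
Qed.

Lemma NoDup_collect_terms (l : list (Z * list nat)) : NoDup (map snd (collect_terms l)).
Proof. induction l; simpl; [constructor|]. now apply NoDup_insert_term. Qed.

Lemma collect_terms_length (k : nat) (l : list (Z * list nat)) :
  (forall p, In p l -> length (snd p) = k) ->
  forall p, In p (collect_terms l) -> length (snd p) = k.
Proof.
  induction l as [|[c m] l IH]; simpl; intros H p Hp; [destruct Hp|].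
  assert (Hx : In (snd p) (map snd (insert_term c m (collect_terms l)))) by (apply in_map; auto).
  apply in_insert_term in Hx as [-> | Hx]; [apply (H (c, m)); auto|].
  apply in_map_iff in Hx as [q [<- Hq]]; auto.
Qed.

(* A polynomial expression that vanishes at [xs] but not everywhere is a witness of
   algebraic dependence: its collected expansion has a nonzero coefficient. *)
Lemma not_alg_indep_of_relation (xs : list CC) (e : pexpr) :
  (forall v, In v (pexpr_vars e) -> (v < length xs)%nat) ->
  pexpr_eval (fun i => nth i xs Czero) e = Czero ->
  (exists f, pexpr_eval f e <> Czero) -> ~ alg_indep xs.
Proof.
  intros Hv H0 [f Hf] Hind.
  set (l := collect_terms (expand (length xs) e)).
  assert (Hlen : forall p, In p l -> length (snd p) = length xs)
    by (apply collect_terms_length, expand_length).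
  assert (Hz : Forall (fun c => c = 0%Z) (map fst l)).
  { apply (Hind (map fst l) (map snd l)).
    - now rewrite !length_map.
    - apply NoDup_collect_terms.
    - apply Forall_forall; intros m Hm; apply in_map_iff in Hm as [p [<- Hp]]; auto.
    - rewrite polysum_terms_eval by auto; unfold l.
      now rewrite terms_eval_collect, terms_eval_expand. }
  apply Hf; rewrite <- (terms_eval_expand (length xs)) by auto.
  rewrite <- terms_eval_collect; now apply terms_eval_zero.
Qed.

Definition select (gens : list CC) (idx : list nat) : list CC :=
  map (fun i => nth i gens Czero) idx.

Fixpoint position (v : nat) (idx : list nat) : nat :=
  match idx with nil => O | a :: t => if Nat.eqb a v then O else S (position v t) end.

Lemma position_spec (v : nat) (idx : list nat) :
  In v idx -> (position v idx < length idx)%nat /\ nth (position v idx) idx O = v.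
Proof.
  induction idx as [|a idx IH]; simpl; [intros []|].
  intros H; destruct (Nat.eqb_spec a v); [split; [lia | auto]|].
  destruct H as [H | H]; [congruence|]; destruct (IH H); split; [lia | auto].
Qed.

Fixpoint rename (idx : list nat) (e : pexpr) : pexpr :=
  match e with
  | PConst c => PConst c
  | PVar v => PVar (position v idx)
  | PAdd a b => PAdd (rename idx a) (rename idx b)
  | PMul a b => PMul (rename idx a) (rename idx b)
  end.

Lemma pexpr_eval_rename (idx : list nat) (g : nat -> CC) (e : pexpr) :
  pexpr_eval g (rename idx e) = pexpr_eval (fun v => g (position v idx)) e.
Proof. induction e; simpl; auto; now rewrite IHe1, IHe2. Qed.

Lemma pexpr_vars_rename (idx : list nat) (e : pexpr) (x : nat) :
  In x (pexpr_vars (rename idx e)) -> exists v, In v (pexpr_vars e) /\ x = position v idx.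
Proof.
  induction e; simpl; intros H.
  - destruct H.
  - destruct H as [<- | []]; eauto.
  - apply in_app_or in H as [H | H];
      [destruct (IHe1 H) as [v [? ?]] | destruct (IHe2 H) as [v [? ?]]];
      exists v; split; auto; apply in_or_app; auto.
  - apply in_app_or in H as [H | H];
      [destruct (IHe1 H) as [v [? ?]] | destruct (IHe2 H) as [v [? ?]]];
      exists v; split; auto; apply in_or_app; auto.
Qed.

Lemma nth_select (gens : list CC) (idx : list nat) (j : nat) :
  (j < length idx)%nat -> nth j (select gens idx) Czero = nth (nth j idx O) gens Czero.
Proof.
  unfold select; revert j; induction idx; intros [|j] H; simpl in *; try lia; auto.
  apply IHidx; lia.
Qed.

Lemma not_alg_indep_select (gens : list CC) (idx : list nat) (e : pexpr) :
  (forall v, In v (pexpr_vars e) -> In v idx) ->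
  pexpr_eval (fun v => nth v gens Czero) e = Czero ->
  (exists f, pexpr_eval f e <> Czero) ->
  ~ alg_indep (select gens idx).
Proof.
  intros Hin Hzero [f Hf].
  apply (not_alg_indep_of_relation _ (rename idx e)).
  - intros x Hx; apply pexpr_vars_rename in Hx as [v [Hv ->]].
    unfold select; rewrite length_map; apply position_spec; auto.
  - rewrite pexpr_eval_rename; transitivity (pexpr_eval (fun v => nth v gens Czero) e); auto.
    apply pexpr_eval_ext; intros v Hv.
    destruct (position_spec v idx (Hin v Hv)) as [Hl Hn].
    now rewrite nth_select, Hn.
  - exists (fun j => f (nth j idx O)); rewrite pexpr_eval_rename, <- (pexpr_eval_ext f); auto.
    intros v Hv; destruct (position_spec v idx (Hin v Hv)) as [_ ->]; auto.
Qed.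

Fixpoint rpeval (p : list Z) (x : R) : R :=
  match p with nil => 0 | c :: p' => IZR c + x * rpeval p' x end.

Lemma peval_RtoC (p : list Z) (x : R) : peval p (RtoC x) = RtoC (rpeval p x).
Proof. induction p; simpl; auto. rewrite IHp; cring. Qed.

Lemma IZR_abs_ge1 (c : Z) : c <> 0%Z -> 1 <= Rabs (IZR c).
Proof. intros Hc; rewrite <- abs_IZR; apply IZR_le; lia. Qed.

Lemma rpeval_zeros (p : list Z) (x : R) : Forall (fun c => c = 0%Z) p -> rpeval p x = 0.
Proof. induction 1; simpl; subst; auto. rewrite IHForall; simpl; ring. Qed.

(* Induct on the coefficients: once the tail is nonzero it dominates the constant term. *)
Lemma rpeval_eventually_ge1 (p : list Z) : Exists (fun c => c <> 0%Z) p ->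
  exists M, forall x, M <= x -> 1 <= Rabs (rpeval p x).
Proof.
  induction p as [|c p IH]; intros H; [inversion H|].
  destruct (Exists_dec (fun c => c <> 0%Z) p) as [Hp | Hp].
  { intros a; destruct (Z.eq_dec a 0); auto. }
  - destruct (IH Hp) as [M HM].
    exists (Rmax M (Rabs (IZR c) + 1)); intros x Hx.
    pose proof (Rmax_l M (Rabs (IZR c) + 1)); pose proof (Rmax_r M (Rabs (IZR c) + 1)).
    specialize (HM x ltac:(lra)); simpl.
    assert (Hx0 : 0 <= x) by (pose proof (Rabs_pos (IZR c)); lra).
    pose proof (Rabs_triang_inv (x * rpeval p x) (- IZR c)) as Htri.
    rewrite Rabs_Ropp, Rabs_mult, (Rabs_right x) in Htri by lra.
    replace (x * rpeval p x - - IZR c) with (IZR c + x * rpeval p x) in Htri by ring.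
    nra.
  - exists 0; intros x _; simpl.
    assert (Hz : Forall (fun c => c = 0%Z) p).
    { apply Forall_forall; intros a Ha; destruct (Z.eq_dec a 0); auto.
      exfalso; apply Hp, Exists_exists; eauto. }
    rewrite rpeval_zeros, Rmult_0_r, Rplus_0_r by auto.
    inversion H; subst; [now apply IZR_abs_ge1 | contradiction].
Qed.

Lemma peval_INR_neq0 (p : list Z) : Exists (fun c => c <> 0%Z) p ->
  forall N, exists n : nat, N <= INR n /\ peval p (RtoC (INR n)) <> Czero.
Proof.
  intros Hp N; destruct (rpeval_eventually_ge1 p Hp) as [M HM].
  destruct (INR_archimed 1 (Rmax M N)) as [n Hn]; [lra|].
  pose proof (Rmax_l M N); pose proof (Rmax_r M N).
  exists n; split; [lra|]; rewrite peval_RtoC; intros Hq; apply RtoC_inj in Hq.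
  specialize (HM (INR n) ltac:(lra)); rewrite Hq, Rabs_R0 in HM; lra.
Qed.

Fixpoint pcompose (m : list Z) (u : pexpr) : pexpr :=
  match m with nil => PConst 0 | c :: m' => PAdd (PConst c) (PMul u (pcompose m' u)) end.

Lemma pexpr_eval_pcompose (f : nat -> CC) (m : list Z) (u : pexpr) :
  pexpr_eval f (pcompose m u) = peval m (pexpr_eval f u).
Proof. induction m; simpl; auto. now rewrite IHm. Qed.

Lemma pexpr_vars_pcompose (m : list Z) (u : pexpr) (x : nat) :
  In x (pexpr_vars (pcompose m u)) -> In x (pexpr_vars u).
Proof. induction m; simpl; intros H; [destruct H|]. apply in_app_or in H as [H | H]; auto. Qed.

Fixpoint ppow (v : pexpr) (n : nat) : pexpr :=
  match n with O => PConst 1 | S n' => PMul v (ppow v n') end.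

Lemma pexpr_eval_ppow (f : nat -> CC) (v : pexpr) (n : nat) :
  pexpr_eval f (ppow v n) = Cpow (pexpr_eval f v) n.
Proof. induction n; simpl; auto. now rewrite IHn. Qed.

Lemma pexpr_vars_ppow (v : pexpr) (n : nat) (x : nat) :
  In x (pexpr_vars (ppow v n)) -> In x (pexpr_vars v).
Proof. induction n; simpl; intros H; [destruct H|]. apply in_app_or in H as [H | H]; auto. Qed.

(* [homogenize m u v] is the homogeneous form [v^(d-1) m(u/v)] of [m], d = length m. *)
Fixpoint homogenize (m : list Z) (u v : pexpr) : pexpr :=
  match m with
  | nil => PConst 0
  | c :: m' => PAdd (PMul (PConst c) (ppow v (length m'))) (PMul u (homogenize m' u v))
  end.

Lemma pexpr_vars_homogenize (m : list Z) (u v : pexpr) (x : nat) :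
  In x (pexpr_vars (homogenize m u v)) -> In x (pexpr_vars u) \/ In x (pexpr_vars v).
Proof.
  induction m; simpl; intros H; [destruct H|].
  rewrite !in_app_iff in H; destruct H as [H | [H | H]]; auto.
  right; eapply pexpr_vars_ppow; eauto.
Qed.

Lemma pexpr_eval_homogenize (f : nat -> CC) (m : list Z) (u v : pexpr) (z : CC) :
  pexpr_eval f u = Cmul z (pexpr_eval f v) ->
  Cmul (pexpr_eval f v) (pexpr_eval f (homogenize m u v))
  = Cmul (Cpow (pexpr_eval f v) (length m)) (peval m z).
Proof.
  intros Hu; induction m as [|c m IH]; simpl; [cring|].
  rewrite pexpr_eval_ppow, Hu.
  transitivity (Cadd (Cmul (ZtoC c) (Cpow (pexpr_eval f v) (S (length m))))
                     (Cmul z (Cmul (pexpr_eval f v) (Cmul (pexpr_eval f v)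
                                                          (pexpr_eval f (homogenize m u v)))))).
  - simpl; cring.
  - rewrite IH; simpl; cring.
Qed.

Lemma pexpr_eval_homogenize_eq0 (f : nat -> CC) (m : list Z) (u v : pexpr) (z : CC) :
  pexpr_eval f v <> Czero -> pexpr_eval f u = Cmul z (pexpr_eval f v) ->
  peval m z = Czero -> pexpr_eval f (homogenize m u v) = Czero.
Proof.
  intros Hv Hu Hm; pose proof (pexpr_eval_homogenize f m u v z Hu) as H.
  rewrite Hm, Cmul_0_r in H; apply Cmul_integral in H as [H | H]; tauto.
Qed.

Lemma pexpr_eval_homogenize_neq0 (f : nat -> CC) (m : list Z) (u v : pexpr) (z : CC) :
  pexpr_eval f v <> Czero -> pexpr_eval f u = Cmul z (pexpr_eval f v) ->
  peval m z <> Czero -> pexpr_eval f (homogenize m u v) <> Czero.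
Proof.
  intros Hv Hu Hm H0; pose proof (pexpr_eval_homogenize f m u v z Hu) as H.
  rewrite H0, Cmul_0_r in H; symmetry in H; apply Cmul_integral in H as [H | H]; auto.
  now apply (Cpow_neq0 _ (length m) Hv).
Qed.

Lemma not_alg_indep_of_algebraic (gens : list CC) (idx : list nat) (p : nat) :
  In p idx -> Calgebraic (nth p gens Czero) -> ~ alg_indep (select gens idx).
Proof.
  intros Hp [m [Hm Hz]].
  apply (not_alg_indep_select gens idx (pcompose m (PVar p))).
  - intros v Hv; apply pexpr_vars_pcompose in Hv as [<- | []]; auto.
  - now rewrite pexpr_eval_pcompose.
  - destruct (peval_INR_neq0 m Hm 0) as [n [_ Hn]]; exists (fun _ => RtoC (INR n)).
    now rewrite pexpr_eval_pcompose.
Qed.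

(* If the ratio [u/v] of two polynomial expressions is algebraic at [gens] although it
   takes arbitrarily large integer values elsewhere, the homogenized minimal relation
   of the ratio is a nontrivial relation among [gens]. *)
Lemma not_alg_indep_of_algebraic_ratio (gens : list CC) (idx : list nat)
    (u v : pexpr) (m : list Z) (z : CC) :
  (forall x, In x (pexpr_vars u) -> In x idx) -> (forall x, In x (pexpr_vars v) -> In x idx) ->
  Exists (fun c => c <> 0%Z) m -> peval m z = Czero ->
  pexpr_eval (fun i => nth i gens Czero) v <> Czero ->
  pexpr_eval (fun i => nth i gens Czero) u = Cmul z (pexpr_eval (fun i => nth i gens Czero) v) ->
  (exists N, forall n : nat, N <= INR n -> exists f, pexpr_eval f v <> Czero /\
       pexpr_eval f u = Cmul (RtoC (INR n)) (pexpr_eval f v)) ->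
  ~ alg_indep (select gens idx).
Proof.
  intros Hu Hv Hm Hz Hv0 Hu0 [N HN].
  apply (not_alg_indep_select gens idx (homogenize m u v)).
  - intros x Hx; apply pexpr_vars_homogenize in Hx as [Hx | Hx]; auto.
  - eapply pexpr_eval_homogenize_eq0; eauto.
  - destruct (peval_INR_neq0 m Hm N) as [n [Hn1 Hn2]].
    destruct (HN n Hn1) as [f [Hf1 Hf2]]; exists f.
    eapply pexpr_eval_homogenize_neq0; eauto.
Qed.

Lemma Crational_div (a b : Z) : b <> 0%Z -> Crational (RtoC (IZR a / IZR b)).
Proof.
  destruct b as [|pb|pb]; intros Hb; [congruence| |].
  - now exists (a # pb).
  - exists ((- a)%Z # pb); unfold Q2R; simpl; f_equal.
    rewrite opp_IZR; replace (IZR (Z.neg pb)) with (- IZR (Z.pos pb)).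
    + field; apply IZR_neq0; lia.
    + now rewrite <- opp_IZR.
Qed.

Lemma Crational_algebraic (x : CC) : Crational x -> Calgebraic x.
Proof.
  intros [[n d] ->]; exists ((- n)%Z :: Z.pos d :: nil); split.
  - apply Exists_cons_tl, Exists_cons_hd; lia.
  - unfold Q2R; simpl; apply injective_projections; simpl; [|ring].
    rewrite opp_IZR; field; apply IZR_neq0; lia.
Qed.

Lemma Crational_of_linear (p q : Z) (y : CC) :
  Cadd (ZtoC p) (Cmul (ZtoC q) y) = Czero -> (q = 0%Z /\ p = 0%Z) \/ Crational y.
Proof.
  destruct y as [a b]; unfold Cadd, Cmul, ZtoC, RtoC, Czero; simpl; intros [= H1 H2].
  destruct (Z.eq_dec q 0) as [Hq | Hq].
  - left; subst; split; auto; apply eq_IZR; simpl in H1; lra.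
  - right; pose proof (IZR_neq0 q Hq).
    assert (b = 0) by (apply (Rmult_eq_reg_l (IZR q)); lra); subst b.
    replace (a, 0) with (RtoC (IZR (- p) / IZR q)); [now apply Crational_div|].
    unfold RtoC; f_equal; rewrite opp_IZR; field_simplify_eq; auto; lra.
Qed.

(** * Consequences of Schanuel's conjecture *)

Definition schanuel_gens (alphas : list CC) : list CC := alphas ++ map Cexp alphas.

Lemma schanuel_select (alphas : list CC) : Schanuel -> Q_lin_indep alphas ->
  exists idx, NoDup idx /\ length idx = length alphas /\
    Forall (fun i => (i < 2 * length alphas)%nat) idx /\
    alg_indep (select (schanuel_gens alphas) idx).
Proof.
  intros HS Hl; destruct (HS alphas Hl) as [idx [H1 [H2 [H3 H4]]]].
  exists idx; rewrite length_app, length_map in H3; repeat split; auto.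
  eapply Forall_impl; [|exact H3]; simpl; intros; lia.
Qed.

Lemma NoDup_length_le_members (idx : list nat) (N : nat) :
  NoDup idx -> Forall (fun i => (i < N)%nat) idx ->
  (length idx <= length (filter (fun j => if in_dec Nat.eq_dec j idx then true else false)
                                (seq 0 N)))%nat.
Proof.
  intros Hnd Hf; apply NoDup_incl_length; auto.
  intros i Hi; apply filter_In; split.
  - apply in_seq; rewrite Forall_forall in Hf; specialize (Hf i Hi); lia.
  - destruct (in_dec Nat.eq_dec i idx); tauto.
Qed.

(* Schanuel's conjecture for [alphas] provides [n] algebraically independent indices
   [idx] among the [2n] generators; [count_members] then proves any disjunction of
   membership patterns that must hold by counting. *)
Ltac schanuel_indices HS Hind :=
  let Hnd := fresh in let Hlen := fresh in let Hlt := fresh in let Hai := fresh in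
  let Hcount := fresh in
  destruct (schanuel_select _ HS Hind) as [idx [Hnd [Hlen [Hlt Hai]]]];
  simpl in Hlen, Hlt;
  pose proof (NoDup_length_le_members idx _ Hnd Hlt) as Hcount;
  rewrite Hlen in Hcount; simpl in Hcount;
  revert Hai.

Ltac count_members :=
  repeat match goal with H : context [in_dec Nat.eq_dec ?j ?idx] |- _ =>
           destruct (in_dec Nat.eq_dec j idx); simpl in H end;
  first [lia | tauto].

Ltac in_vars := let v := fresh in let Hv := fresh in
  intros v Hv; simpl in Hv; repeat destruct Hv as [<- | Hv]; auto; destruct Hv.

Ltac neq0_as k := match goal with |- ?X <> Czero =>
  replace X with (RtoC k) by (cfield; repeat split; auto) end; apply RtoC_neq0.

(* Schanuel for [log x, y log x]: these two span a two-dimensional space over Q, while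
   [x], [x^y] and [y] are algebraic. *)
Theorem gelfond_schneider (x y Lx : CC) : Schanuel ->
  Cexp Lx = x -> x <> Cone -> Calgebraic x -> Calgebraic y -> ~ Crational y ->
  ~ Calgebraic (Cexp (Cmul y Lx)).
Proof.
  intros HS Hx Hx1 Hxa [my [Hmy Hmy0]] Hyr HA.
  assert (HL : Lx <> Czero) by (apply Cexp_neq1_log_neq0; congruence).
  assert (Hind : Q_lin_indep (Lx :: Cmul y Lx :: nil)).
  { intros [|p [|q [|]]] Hcs H; simpl in Hcs; try discriminate; simpl in H.
    assert (H' : Cmul (Cadd (ZtoC p) (Cmul (ZtoC q) y)) Lx = Czero) by (rewrite <- H; cring).
    apply Cmul_integral in H' as [H' | H']; [|contradiction].
    apply Crational_of_linear in H' as [[-> ->] | H']; [|contradiction].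
    repeat constructor. }
  schanuel_indices HS Hind.
  assert (Hc : In 2%nat idx \/ In 3%nat idx \/ (In 0%nat idx /\ In 1%nat idx)) by count_members.
  destruct Hc as [Hc | [Hc | [Hc0 Hc1]]].
  - apply not_alg_indep_of_algebraic with 2%nat; simpl; subst; auto.
  - apply not_alg_indep_of_algebraic with 3%nat; simpl; auto.
  - apply (not_alg_indep_of_algebraic_ratio _ _ (PVar 1) (PVar 0) my y); simpl; auto;
      try in_vars.
    exists 0; intros n _; exists (fun i => match i with O => Cone | _ => RtoC (INR n) end).
    simpl; split; [neq0_as 1; lra | cring].
Qed.

Lemma Cmul_ZtoC_eq0 (q : Z) (x : CC) : Cmul (ZtoC q) x = Czero -> x <> Czero -> q = 0%Z.
Proof.
  intros H Hx; destruct (Z.eq_dec q 0) as [Hq | Hq]; auto.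
  apply Cmul_integral in H as [H | H]; [now apply ZtoC_neq0 in Hq | contradiction].
Qed.

Lemma not_Q_lin_indep (xs : list CC) : ~ Q_lin_indep xs ->
  exists cs, length cs = length xs /\ lincomb cs xs = Czero /\ ~ Forall (fun c => c = 0%Z) cs.
Proof.
  intros H; apply not_all_ex_not in H as [cs H]; exists cs.
  apply imply_to_and in H as [H1 H]; apply imply_to_and in H as [H2 H3]; auto.
Qed.

(** * An algebraic irrational base and a transcendental exponent *)

Section AlgebraicIrrationalBase.

Variables (z w Lz Lw : CC) (m : list Z).
Hypothesis schanuel : Schanuel.
Hypotheses (Hz : Cexp Lz = z) (Hw : Cexp Lw = w) (Hz1 : z <> Cone) (Hw1 : w <> Cone).
Hypotheses (Hm : Exists (fun c => c <> 0%Z) m) (Hmz : peval m z = Czero).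
Hypotheses (Hzr : ~ Crational z) (Hwt : Ctranscendental w).
Hypotheses (HA : Calgebraic (Cexp (Cmul w Lz))) (HB : Calgebraic (Cexp (Cmul z Lw))).

Let Lz_neq0 : Lz <> Czero.
Proof. apply Cexp_neq1_log_neq0; congruence. Qed.

Let Lw_neq0 : Lw <> Czero.
Proof. apply Cexp_neq1_log_neq0; congruence. Qed.

Let w_neq0 : w <> Czero.
Proof. rewrite <- Hw; apply Cexp_neq0. Qed.

Let z_algebraic : Calgebraic z.
Proof. now exists m. Qed.

Let w_linear_irrational (a c : Z) : c <> 0%Z -> Cadd (ZtoC a) (Cmul (ZtoC c) w) <> Czero.
Proof.
  intros Hc H; apply Crational_of_linear in H as [[H _] | H]; [contradiction|].
  now apply Hwt, Crational_algebraic.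
Qed.

(* A relation [p log z + q log w = 0] would make [z log w] a rational multiple of
   [z log z], which Schanuel for [log z, z log w] forbids. *)
Lemma Lz_Lw_Q_indep (p q : Z) :
  Cadd (Cmul (ZtoC p) Lz) (Cmul (ZtoC q) Lw) = Czero -> p = 0%Z /\ q = 0%Z.
Proof.
  intros Hpq.
  destruct (Z.eq_dec p 0) as [Hp | Hp]; destruct (Z.eq_dec q 0) as [Hq | Hq]; auto; exfalso.
  - apply Hq, (Cmul_ZtoC_eq0 q Lw); auto; rewrite <- Hpq; subst; cring.
  - apply Hp, (Cmul_ZtoC_eq0 p Lz); auto; rewrite <- Hpq; subst; cring.
  - assert (Hind : Q_lin_indep (Lz :: Cmul z Lw :: nil)).
    { intros [|r [|s [|]]] Hcs H; simpl in Hcs; try discriminate; simpl in H.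
      assert (H' : Cmul (Cadd (ZtoC (q * r)) (Cmul (ZtoC (- (s * p))) z)) Lz = Czero).
      { apply (Ceq_by_relation _ Czero (Cmul (ZtoC (- s)) z) _ Hpq).
        apply (Ceq_by_relation _ _ (ZtoC q) _ H); cring. }
      apply Cmul_integral in H' as [H' | H']; [|contradiction].
      apply Crational_of_linear in H' as [[H1 H2] | H']; [|contradiction].
      assert (s = 0%Z) by nia; assert (r = 0%Z) by nia; subst; repeat constructor. }
    schanuel_indices schanuel Hind.
    assert (Hc : In 2%nat idx \/ In 3%nat idx \/ (In 0%nat idx /\ In 1%nat idx)) by count_members.
    destruct Hc as [Hc | [Hc | [Hc0 Hc1]]].
    + apply not_alg_indep_of_algebraic with 2%nat; simpl; auto; now rewrite Hz.
    + apply not_alg_indep_of_algebraic with 3%nat; simpl; auto.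
    + apply (not_alg_indep_of_algebraic_ratio _ _ (PMul (PConst q) (PVar 1))
               (PMul (PConst (- p)) (PVar 0)) m z); simpl; auto; try in_vars.
      * apply Cmul_neq0; auto; apply ZtoC_neq0; lia.
      * apply (Ceq_by_relation _ _ z _ Hpq); cring.
      * exists 0; intros n _; pose proof (IZR_neq0 q Hq); pose proof (IZR_neq0 p Hp).
        exists (fun i => match i with O => Cone | _ => RtoC (- IZR p * INR n / IZR q) end).
        simpl; split; [neq0_as (- IZR p); lra | cfield; auto].
Qed.

(* Schanuel for all four logarithms: [z], [z^w], [w^z] are algebraic, [z log w] is
   algebraic over [log w] and [w log z] lies in [Q(w, log z)], so at most three of the
   eight generators are algebraically independent. *)
Lemma four_logs_Q_dep : ~ Q_lin_indep (Lz :: Lw :: Cmul w Lz :: Cmul z Lw :: nil).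
Proof.
  intros Hind; schanuel_indices schanuel Hind.
  assert (Hc : In 4%nat idx \/ In 6%nat idx \/ In 7%nat idx \/ (In 1%nat idx /\ In 3%nat idx)
     \/ (In 0%nat idx /\ In 2%nat idx /\ In 5%nat idx)) by count_members.
  destruct Hc as [Hc | [Hc | [Hc | [[Hc1 Hc3] | [Hc0 [Hc2 Hc5]]]]]].
  - apply not_alg_indep_of_algebraic with 4%nat; simpl; auto; now rewrite Hz.
  - apply not_alg_indep_of_algebraic with 6%nat; simpl; auto.
  - apply not_alg_indep_of_algebraic with 7%nat; simpl; auto.
  - apply (not_alg_indep_of_algebraic_ratio _ _ (PVar 3) (PVar 1) m z); simpl; auto; try in_vars.
    exists 0; intros n _; exists (fun i => match i with 1%nat => Cone | _ => RtoC (INR n) end).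
    simpl; split; [neq0_as 1; lra | cring].
  - apply (not_alg_indep_select _ _ (PAdd (PVar 2) (PMul (PConst (-1)) (PMul (PVar 5) (PVar 0))))).
    + in_vars.
    + simpl; rewrite Hw; cring.
    + exists (fun i => match i with 2%nat => Cone | _ => Czero end); simpl; neq0_as 1; lra.
Qed.

Lemma not_alg_indep_Lz_Lw_w (a b c d : Z) (idx : list nat) : c <> 0%Z ->
  Cadd (Cmul (ZtoC a) Lz) (Cadd (Cmul (ZtoC b) Lw)
    (Cadd (Cmul (ZtoC c) (Cmul w Lz)) (Cadd (Cmul (ZtoC d) (Cmul z Lw)) Czero))) = Czero ->
  In 0%nat idx -> In 1%nat idx -> In 4%nat idx ->
  ~ alg_indep (select (schanuel_gens (Lz :: Lw :: Cmul z Lw :: nil)) idx).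
Proof.
  intros Hc Hr Hx0 Hx1 Hx4; pose proof (IZR_neq0 c Hc).
  destruct (Z.eq_dec d 0) as [-> | Hd].
  - apply (not_alg_indep_select _ _ (PAdd (PMul (PConst a) (PVar 0))
             (PAdd (PMul (PConst c) (PMul (PVar 4) (PVar 0))) (PMul (PConst b) (PVar 1))))).
    + in_vars.
    + simpl; rewrite Hw; apply (Ceq_by_relation _ Czero Cone _ Hr); cring.
    + exists (fun i => match i with 0%nat => Cone | 1%nat => Czero
                       | _ => RtoC ((1 - IZR a) / IZR c) end).
      simpl; neq0_as 1; lra.
  - apply (not_alg_indep_of_algebraic_ratio _ _ (PAdd (PMul (PConst (- a)) (PVar 0))
             (PAdd (PMul (PConst (- c)) (PMul (PVar 4) (PVar 0))) (PMul (PConst (- b)) (PVar 1))))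
             (PMul (PConst d) (PVar 1)) m z); simpl; auto; try in_vars.
    + apply Cmul_neq0; auto; now apply ZtoC_neq0.
    + rewrite Hw; apply (Ceq_by_relation _ _ (ZtoC (-1)) _ Hr); cring.
    + exists 0; intros n _.
      exists (fun i => match i with 0%nat | 1%nat => Cone
               | _ => RtoC ((- (INR n * IZR d) - IZR a - IZR b) / IZR c) end).
      simpl; split; [neq0_as (IZR d); now apply IZR_neq0 | cfield; auto].
Qed.

Lemma not_alg_indep_Lz_zLw_w (a b c d : Z) (idx : list nat) : c <> 0%Z ->
  Cadd (Cmul (ZtoC a) Lz) (Cadd (Cmul (ZtoC b) Lw)
    (Cadd (Cmul (ZtoC c) (Cmul w Lz)) (Cadd (Cmul (ZtoC d) (Cmul z Lw)) Czero))) = Czero ->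
  In 0%nat idx -> In 2%nat idx -> In 4%nat idx ->
  ~ alg_indep (select (schanuel_gens (Lz :: Lw :: Cmul z Lw :: nil)) idx).
Proof.
  intros Hc Hr Hx0 Hx2 Hx4; pose proof (IZR_neq0 c Hc).
  set (v := PAdd (PMul (PConst a) (PVar 0))
              (PAdd (PMul (PConst c) (PMul (PVar 4) (PVar 0))) (PMul (PConst d) (PVar 2)))).
  destruct (Z.eq_dec b 0) as [-> | Hb].
  - apply (not_alg_indep_select _ _ v).
    + in_vars.
    + simpl; rewrite Hw; apply (Ceq_by_relation _ Czero Cone _ Hr); cring.
    + exists (fun i => match i with 0%nat => Cone | 2%nat => Czero
                       | _ => RtoC ((1 - IZR a) / IZR c) end).
      simpl; neq0_as 1; lra.
  - pose proof (IZR_neq0 b Hb).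
    assert (Hv : pexpr_eval (fun i => nth i (schanuel_gens (Lz :: Lw :: Cmul z Lw :: nil)) Czero) v
                 = Cmul (ZtoC (- b)) Lw).
    { simpl; rewrite Hw; apply (Ceq_by_relation _ _ Cone _ Hr); cring. }
    apply (not_alg_indep_of_algebraic_ratio _ _ (PMul (PConst (- b)) (PVar 2)) v m z);
      auto; try in_vars.
    + rewrite Hv; apply Cmul_neq0; auto; apply ZtoC_neq0; lia.
    + rewrite Hv; simpl; cring.
    + exists 1; intros n Hn; assert (INR n <> 0) by lra.
      exists (fun i => match i with 0%nat | 2%nat => Cone
               | _ => RtoC ((- IZR b / INR n - IZR a - IZR d) / IZR c) end).
      simpl; split; [neq0_as (- IZR b / INR n) | cfield; auto].
      unfold Rdiv; apply Rmult_integral_contrapositive; split; [lra|].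
      now apply Rinv_neq_0_compat.
Qed.

(* By [four_logs_Q_dep] the four logarithms satisfy a relation, necessarily involving
   [w log z]; it puts [w] in the field generated by the other logarithms, so that
   Schanuel for [log z, log w, z log w] fails. *)
Lemma three_logs_Q_dep : ~ Q_lin_indep (Lz :: Lw :: Cmul z Lw :: nil).
Proof.
  intros Hind.
  destruct (not_Q_lin_indep _ four_logs_Q_dep) as [cs [Hcs [Hr Hnz]]].
  destruct cs as [|a [|b [|c [|d [|]]]]]; simpl in Hcs; try discriminate; simpl in Hr.
  destruct (Z.eq_dec c 0) as [-> | Hc].
  { apply Hnz; assert (H3 : Forall (fun c => c = 0%Z) (a :: b :: d :: nil)).
    { apply Hind; auto; simpl; apply (Ceq_by_relation _ Czero Cone _ Hr); cring. }
    inversion_clear H3 as [|? ? Ha H4]; inversion_clear H4 as [|? ? Hb H5].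
    inversion_clear H5 as [|? ? Hd _]; repeat constructor; auto. }
  schanuel_indices schanuel Hind.
  assert (Hcs' : In 3%nat idx \/ In 5%nat idx \/ (In 1%nat idx /\ In 2%nat idx)
     \/ (In 0%nat idx /\ In 1%nat idx /\ In 4%nat idx)
     \/ (In 0%nat idx /\ In 2%nat idx /\ In 4%nat idx)) by count_members.
  destruct Hcs' as [Hx | [Hx | [[Hx1 Hx2] | [[Hx0 [Hx1 Hx4]] | [Hx0 [Hx2 Hx4]]]]]].
  - apply not_alg_indep_of_algebraic with 3%nat; simpl; auto; now rewrite Hz.
  - apply not_alg_indep_of_algebraic with 5%nat; simpl; auto.
  - apply (not_alg_indep_of_algebraic_ratio _ _ (PVar 2) (PVar 1) m z); simpl; auto; try in_vars.
    exists 0; intros n _; exists (fun i => match i with 1%nat => Cone | _ => RtoC (INR n) end).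
    simpl; split; [neq0_as 1; lra | cring].
  - now apply (not_alg_indep_Lz_Lw_w a b c d).
  - now apply (not_alg_indep_Lz_zLw_w a b c d).
Qed.

Section OneRelation.

Variables a b d : Z.
Hypotheses (Ha : a <> 0%Z) (Hd : d <> 0%Z).
Hypothesis Hr : Cadd (Cmul (ZtoC a) Lz) (Cadd (Cmul (ZtoC b) Lw)
                  (Cadd (Cmul (ZtoC d) (Cmul z Lw)) Czero)) = Czero.

(* The relation makes [z] the ratio [-(a log z + b log w) / (d log w)]. *)
Lemma not_alg_indep_Lz_Lw (gens : list CC) (idx : list nat) :
  nth 0 gens Czero = Lz -> nth 1 gens Czero = Lw -> In 0%nat idx -> In 1%nat idx ->
  ~ alg_indep (select gens idx).
Proof.
  intros H0 H1 Hx0 Hx1; pose proof (IZR_neq0 a Ha); pose proof (IZR_neq0 d Hd).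
  apply (not_alg_indep_of_algebraic_ratio _ _
           (PAdd (PMul (PConst (- a)) (PVar 0)) (PMul (PConst (- b)) (PVar 1)))
           (PMul (PConst d) (PVar 1)) m z); simpl; auto; try in_vars.
  - rewrite H1; apply Cmul_neq0; auto; now apply ZtoC_neq0.
  - rewrite H0, H1; apply (Ceq_by_relation _ _ (ZtoC (-1)) _ Hr); cring.
  - exists 0; intros n _.
    exists (fun i => match i with 1%nat => Cone
             | _ => RtoC ((- (INR n * IZR d) - IZR b) / IZR a) end).
    simpl; split; [neq0_as (IZR d); auto | cfield; auto].
Qed.

Lemma Lz_Lw_wLz_Q_dep : ~ Q_lin_indep (Lz :: Lw :: Cmul w Lz :: nil).
Proof.
  intros Hind; schanuel_indices schanuel Hind.
  assert (Hc : In 3%nat idx \/ In 5%nat idx \/ (In 0%nat idx /\ In 1%nat idx)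
     \/ (In 0%nat idx /\ In 2%nat idx /\ In 4%nat idx)
     \/ (In 1%nat idx /\ In 2%nat idx /\ In 4%nat idx)) by count_members.
  destruct Hc as [Hx | [Hx | [[Hx0 Hx1] | [[Hx0 [Hx2 Hx4]] | [Hx1 [Hx2 Hx4]]]]]].
  - apply not_alg_indep_of_algebraic with 3%nat; simpl; auto; now rewrite Hz.
  - apply not_alg_indep_of_algebraic with 5%nat; simpl; auto.
  - now apply not_alg_indep_Lz_Lw.
  - apply (not_alg_indep_select _ _ (PAdd (PVar 2) (PMul (PConst (-1)) (PMul (PVar 4) (PVar 0))))).
    + in_vars.
    + simpl; rewrite Hw; cring.
    + exists (fun i => match i with 2%nat => Cone | _ => Czero end); simpl; neq0_as 1; lra.
  - (* [w] times the relation expresses [z] through [w log z] and [w log w] *)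
    apply (not_alg_indep_of_algebraic_ratio _ _
             (PAdd (PMul (PConst (- a)) (PVar 2)) (PMul (PConst (- b)) (PMul (PVar 4) (PVar 1))))
             (PMul (PConst d) (PMul (PVar 4) (PVar 1))) m z); simpl; auto; try in_vars.
    + rewrite Hw; apply Cmul_neq0; [now apply ZtoC_neq0 | now apply Cmul_neq0].
    + rewrite Hw; apply (Ceq_by_relation _ _ (Cmul (ZtoC (-1)) w) _ Hr); cring.
    + exists 0; intros n _; pose proof (IZR_neq0 a Ha); pose proof (IZR_neq0 d Hd).
      exists (fun i => match i with 1%nat | 4%nat => Cone
               | _ => RtoC ((- (INR n * IZR d) - IZR b) / IZR a) end).
      simpl; split; [neq0_as (IZR d); auto | cfield; auto].
Qed.

(* Two independent relations determine [log z] and [w] over [Q(z, log w)]; Schanuel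
   for [log z, log w] then fails. *)
Lemma second_relation_absurd (a2 b2 c2 : Z) : b2 <> 0%Z -> c2 <> 0%Z ->
  Cadd (Cmul (ZtoC a2) Lz) (Cadd (Cmul (ZtoC b2) Lw)
    (Cadd (Cmul (ZtoC c2) (Cmul w Lz)) Czero)) = Czero ->
  False.
Proof.
  intros Hb2 Hc2 Hr2.
  assert (Hind : Q_lin_indep (Lz :: Lw :: nil)).
  { intros [|p [|q [|]]] Hcs Hl; simpl in Hcs; try discriminate; simpl in Hl.
    destruct (Lz_Lw_Q_indep p q) as [-> ->]; [rewrite <- Hl; cring | repeat constructor]. }
  schanuel_indices schanuel Hind.
  assert (Hc : In 2%nat idx \/ In 3%nat idx \/ (In 0%nat idx /\ In 1%nat idx)) by count_members.
  destruct Hc as [Hx | [Hx | [Hx0 Hx1]]].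
  - apply not_alg_indep_of_algebraic with 2%nat; simpl; auto; now rewrite Hz.
  - (* with [W = a2 + c2 w], the two relations give [a b2 - b W = z d W] *)
    apply (not_alg_indep_of_algebraic_ratio _ _
             (PAdd (PConst (a * b2))
                   (PMul (PConst (- b)) (PAdd (PConst a2) (PMul (PConst c2) (PVar 3)))))
             (PMul (PConst d) (PAdd (PConst a2) (PMul (PConst c2) (PVar 3)))) m z);
      simpl; auto; try in_vars.
    + rewrite Hw; apply Cmul_neq0; [now apply ZtoC_neq0 | now apply w_linear_irrational].
    + rewrite Hw; apply (Cmul_cancel_r _ _ Lw Lw_neq0).
      apply (Ceq_by_relation _ _ (ZtoC a) _ Hr2).
      apply (Ceq_by_relation _ _ (Cmul (ZtoC (-1)) (Cadd (ZtoC a2) (Cmul (ZtoC c2) w))) _ Hr).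
      cring.
    + pose proof (IZR_neq0 a Ha); pose proof (IZR_neq0 d Hd).
      pose proof (IZR_neq0 b2 Hb2); pose proof (IZR_neq0 c2 Hc2).
      assert (Hd1 : 1 <= Rabs (IZR d)) by now apply IZR_abs_ge1.
      exists (Rabs (IZR b) + 1); intros n Hn.
      assert (HD : IZR b + INR n * IZR d <> 0).
      { intros HD; assert (Habs : Rabs (INR n * IZR d) = Rabs (IZR b))
          by (replace (INR n * IZR d) with (- IZR b) by lra; apply Rabs_Ropp).
        rewrite Rabs_mult, (Rabs_right (INR n)) in Habs by (apply Rle_ge, pos_INR).
        pose proof (Rabs_pos (IZR b)); nra. }
      exists (fun _ => RtoC ((IZR a * IZR b2 / (IZR b + INR n * IZR d) - IZR a2) / IZR c2)).
      simpl; split; [|cfield; auto].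
      neq0_as (IZR d * (IZR a * IZR b2 / (IZR b + INR n * IZR d))).
      apply Rmult_integral_contrapositive; split; auto.
      unfold Rdiv; apply Rmult_integral_contrapositive; split; [|now apply Rinv_neq_0_compat].
      now apply Rmult_integral_contrapositive.
  - now apply not_alg_indep_Lz_Lw.
Qed.

End OneRelation.

Lemma algebraic_irrational_base_absurd : False.
Proof.
  destruct (not_Q_lin_indep _ three_logs_Q_dep) as [cs [Hcs [Hr Hnz]]].
  destruct cs as [|a [|b [|d [|]]]]; simpl in Hcs; try discriminate; simpl in Hr.
  assert (Hd : d <> 0%Z).
  { intros ->; destruct (Lz_Lw_Q_indep a b) as [-> ->].
    - apply (Ceq_by_relation _ Czero Cone _ Hr); cring.
    - apply Hnz; repeat constructor. }
  assert (Ha : a <> 0%Z).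
  { intros ->; assert (Hx : Cmul (Cadd (ZtoC b) (Cmul (ZtoC d) z)) Lw = Czero)
      by (apply (Ceq_by_relation _ Czero Cone _ Hr); cring).
    apply Cmul_integral in Hx as [Hx | Hx]; [|contradiction].
    apply Crational_of_linear in Hx as [[Hx _] | Hx]; contradiction. }
  destruct (not_Q_lin_indep _ (Lz_Lw_wLz_Q_dep a b d Ha Hd Hr)) as [cs2 [Hcs2 [Hr2 Hnz2]]].
  destruct cs2 as [|a2 [|b2 [|c2 [|]]]]; simpl in Hcs2; try discriminate; simpl in Hr2.
  assert (Hc2 : c2 <> 0%Z).
  { intros ->; destruct (Lz_Lw_Q_indep a2 b2) as [-> ->].
    - apply (Ceq_by_relation _ Czero Cone _ Hr2); cring.
    - apply Hnz2; repeat constructor. }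
  assert (Hb2 : b2 <> 0%Z).
  { intros ->; assert (Hx : Cmul (Cadd (ZtoC a2) (Cmul (ZtoC c2) w)) Lz = Czero)
      by (apply (Ceq_by_relation _ Czero Cone _ Hr2); cring).
    apply Cmul_integral in Hx as [Hx | Hx]; [|contradiction].
    now apply (w_linear_irrational a2 c2). }
  exact (second_relation_absurd a b d Ha Hd Hr a2 b2 c2 Hb2 Hc2 Hr2).
Qed.

End AlgebraicIrrationalBase.

(** * Powers and roots of algebraic numbers *)

Fixpoint Csum (f : nat -> CC) (n : nat) : CC :=
  match n with O => Czero | S n' => Cadd (Csum f n') (f n') end.

Lemma Csum_ext (f g : nat -> CC) (n : nat) :
  (forall i, (i < n)%nat -> f i = g i) -> Csum f n = Csum g n.
Proof. intros H; induction n; simpl; auto. rewrite IHn, H; auto. Qed.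

Lemma Csum_shift (f : nat -> CC) (n : nat) :
  Csum f (S n) = Cadd (f O) (Csum (fun i => f (S i)) n).
Proof. induction n; simpl in *; [cring|]. rewrite IHn; cring. Qed.

Lemma Csum_add_scale (f g : nat -> CC) (a : CC) (n : nat) :
  Csum (fun i => Cadd (f i) (Cmul a (g i))) n = Cadd (Csum f n) (Cmul a (Csum g n)).
Proof. induction n; simpl; [cring|]. rewrite IHn; cring. Qed.

Lemma Csum_scale (f : nat -> CC) (a : CC) (n : nat) :
  Csum (fun i => Cmul a (f i)) n = Cmul a (Csum f n).
Proof. induction n; simpl; [cring|]. rewrite IHn; cring. Qed.

Lemma Csum_zero (f : nat -> CC) (n : nat) :
  (forall i, (i < n)%nat -> f i = Czero) -> Csum f n = Czero.
Proof. intros H; induction n; simpl; auto. rewrite IHn, H by auto; cring. Qed.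

Lemma peval_Csum (l : list Z) (x : CC) :
  peval l x = Csum (fun i => Cmul (ZtoC (nth i l 0%Z)) (Cpow x i)) (length l).
Proof.
  revert x; induction l as [|c l IH]; intros x; [reflexivity|].
  change (length (c :: l)) with (S (length l)); rewrite Csum_shift; cbn [peval nth Cpow].
  rewrite IH, <- Csum_scale; f_equal; [cring|].
  apply Csum_ext; intros i _; cbn [nth Cpow]; cring.
Qed.

Lemma peval_app (l1 l2 : list Z) (x : CC) :
  peval (l1 ++ l2) x = Cadd (peval l1 x) (Cmul (Cpow x (length l1)) (peval l2 x)).
Proof. induction l1; simpl; [cring|]. rewrite IHl1; cring. Qed.

Fixpoint zcomb (lam : list Z) (vs : list (nat -> Z)) (i : nat) : Z :=
  match lam, vs with a :: l', v :: vs' => (a * v i + zcomb l' vs' i)%Z | _, _ => 0%Z end.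

Lemma zcomb_app (m1 m2 : list Z) (l1 l2 : list (nat -> Z)) (i : nat) :
  length m1 = length l1 -> zcomb (m1 ++ m2) (l1 ++ l2) i = (zcomb m1 l1 i + zcomb m2 l2 i)%Z.
Proof.
  revert l1; induction m1; intros [|v l1] H; simpl in *; try lia.
  rewrite IHm1 by lia; lia.
Qed.

Lemma zcomb_scale (a : Z) (m : list Z) (l : list (nat -> Z)) (i : nat) :
  zcomb (map (Z.mul a) m) l i = (a * zcomb m l i)%Z.
Proof. revert l; induction m; intros [|v l]; simpl; try lia. rewrite IHm; lia. Qed.

Lemma zcomb_eliminate (a0 : Z) (n : nat) (v0 : nat -> Z) (m : list Z) (l : list (nat -> Z))
    (i : nat) :
  zcomb m (map (fun v i => (a0 * v i - v n * v0 i)%Z) l) i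
  = (a0 * zcomb m l i - zcomb m l n * v0 i)%Z.
Proof. revert l; induction m; intros [|v l]; simpl; try lia. rewrite IHm; lia. Qed.

Lemma zcomb_eq0 (m : list Z) (l : list (nat -> Z)) (n : nat) :
  (forall v, In v l -> v n = 0%Z) -> zcomb m l n = 0%Z.
Proof.
  revert l; induction m; intros [|v l] H; simpl; auto.
  rewrite (H v), IHm; [lia | |left]; auto.
  intros v' Hv'; apply H; right; auto.
Qed.

Definition zkernel_nontrivial (vs : list (nat -> Z)) (n : nat) : Prop :=
  exists lam, length lam = length vs /\ Exists (fun a => a <> 0%Z) lam /\
    forall i, (i < n)%nat -> zcomb lam vs i = 0%Z.

(* Gaussian elimination of coordinate [n] using the pivot [v0]. *)
Lemma zkernel_nontrivial_pivot (n : nat) (l1 l2 : list (nat -> Z)) (v0 : nat -> Z) :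
  v0 n <> 0%Z ->
  zkernel_nontrivial (map (fun v i => (v0 n * v i - v n * v0 i)%Z) (l1 ++ l2)) n ->
  zkernel_nontrivial (l1 ++ v0 :: l2) (S n).
Proof.
  intros Hv0 [mu [Hmu1 [Hmu2 Hmu3]]].
  rewrite length_map, length_app in Hmu1.
  set (m1 := firstn (length l1) mu); set (m2 := skipn (length l1) mu).
  assert (Hm : mu = m1 ++ m2) by (symmetry; apply firstn_skipn).
  assert (Hm1 : length m1 = length l1) by (unfold m1; rewrite length_firstn; lia).
  set (s := zcomb mu (l1 ++ l2) n).
  exists (map (Z.mul (v0 n)) m1 ++ (- s)%Z :: map (Z.mul (v0 n)) m2).
  assert (Hkey : forall i, zcomb (map (Z.mul (v0 n)) m1 ++ (- s)%Z :: map (Z.mul (v0 n)) m2)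
                                 (l1 ++ v0 :: l2) i
                           = (v0 n * zcomb mu (l1 ++ l2) i - s * v0 i)%Z).
  { intros i; rewrite zcomb_app by (now rewrite length_map); simpl.
    rewrite !zcomb_scale, Hm, zcomb_app by auto; lia. }
  repeat split.
  - rewrite Hm, length_app in Hmu1; rewrite !length_app; simpl; rewrite !length_map; lia.
  - rewrite Hm in Hmu2; apply Exists_app in Hmu2 as [H | H];
      apply Exists_app; [left | right; apply Exists_cons_tl];
      apply Exists_exists in H as [x [Hx1 Hx2]]; apply Exists_exists;
      exists (v0 n * x)%Z; (split; [apply in_map; auto | lia]).
  - intros i Hi; rewrite Hkey; destruct (Nat.eq_dec i n) as [-> | Hin]; [fold s; lia|].
    specialize (Hmu3 i ltac:(lia)); rewrite zcomb_eliminate in Hmu3; fold s in Hmu3; lia.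
Qed.

Lemma zkernel_nontrivial_of_length (n : nat) (vs : list (nat -> Z)) :
  length vs = S n -> zkernel_nontrivial vs n.
Proof.
  revert vs; induction n as [|n IH]; intros vs Hl.
  - exists (1%Z :: nil); repeat split; [now destruct vs as [|? [|]] | constructor; lia | lia].
  - destruct (classic (exists v, In v vs /\ v n <> 0%Z)) as [[v0 [Hin Hv0]] | Hno].
    + apply in_split in Hin as [l1 [l2 ->]]; apply zkernel_nontrivial_pivot; auto.
      apply IH; rewrite length_map, length_app; rewrite length_app in Hl; simpl in Hl; lia.
    + destruct vs as [|v vs']; simpl in Hl; [lia|].
      destruct (IH vs' ltac:(lia)) as [mu [Hmu1 [Hmu2 Hmu3]]].
      exists (0%Z :: mu); repeat split; simpl; [lia | now apply Exists_cons_tl|].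
      intros i Hi; destruct (Nat.eq_dec i n) as [-> | Hin]; [|rewrite Hmu3 by lia; lia].
      rewrite zcomb_eq0; [lia|]; intros v' Hv'; destruct (Z.eq_dec (v' n) 0); auto.
      exfalso; apply Hno; exists v'; simpl; auto.
Qed.

Lemma peval_leading_coeff (P : list Z) : Exists (fun c => c <> 0%Z) P ->
  exists P0 c, c <> 0%Z /\ forall x, peval P x = peval (P0 ++ c :: nil) x.
Proof.
  induction P as [|a P IH] using rev_ind; intros H; [inversion H|].
  destruct (Z.eq_dec a 0) as [-> | Ha]; [|exists P, a; auto].
  destruct IH as [P0 [c [Hc HP]]].
  - apply Exists_app in H as [H | H]; auto.
    inversion H as [? ? H' | ? ? H']; [congruence | inversion H'].
  - exists P0, c; split; auto; intros x; rewrite peval_app, <- HP; simpl; cring.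
Qed.

Section PowersOfAlgebraic.

Variables (P0 : list Z) (c : Z) (D : nat) (E : CC).
Hypothesis Hrel : Cadd (Csum (fun i => Cmul (ZtoC (nth i P0 0%Z)) (Cpow E i)) (S D))
                       (Cmul (ZtoC c) (Cpow E (S D))) = Czero.

(* [reduce_pow j] lists the coordinates of [c^j E^j] on [1, E, ..., E^D]: multiply
   by [c E] and eliminate [c E^(D+1)] with the relation. *)
Fixpoint reduce_pow (j : nat) : nat -> Z :=
  match j with
  | O => fun i => if Nat.eqb i 0 then 1%Z else 0%Z
  | S j' => fun i => ((match i with O => 0 | S i' => c * reduce_pow j' i' end)
                      - reduce_pow j' D * nth i P0 0)%Z
  end.

Lemma reduce_pow_spec (j : nat) :
  Cmul (Cpow (ZtoC c) j) (Cpow E j) = Csum (fun i => Cmul (ZtoC (reduce_pow j i)) (Cpow E i)) (S D).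
Proof.
  induction j as [|j IH].
  - rewrite Csum_shift, Csum_zero by (intros; unfold ZtoC; cring); cbn; cring.
  - set (T := Csum (fun i => Cmul (ZtoC (nth i P0 0%Z)) (Cpow E i)) (S D)) in *.
    set (S0 := Csum (fun i => Cmul (ZtoC (reduce_pow j i)) (Cpow E i)) D).
    transitivity (Cmul (Cmul (ZtoC c) E) (Cmul (Cpow (ZtoC c) j) (Cpow E j))); [simpl; cring|].
    rewrite IH; simpl Csum at 1; fold S0; simpl reduce_pow.
    rewrite (Csum_ext _ (fun i => Cadd
        (Cmul (ZtoC (match i with O => 0 | S i' => c * reduce_pow j i' end)) (Cpow E i))
        (Cmul (ZtoC (- reduce_pow j D)) (Cmul (ZtoC (nth i P0 0%Z)) (Cpow E i)))))
      by (intros; cring).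
    rewrite Csum_add_scale; fold T; rewrite Csum_shift.
    rewrite (Csum_ext _ (fun i => Cmul (Cmul (ZtoC c) E) (Cmul (ZtoC (reduce_pow j i)) (Cpow E i))))
      by (intros; simpl; cring).
    rewrite Csum_scale; fold S0.
    apply (Ceq_by_relation _ _ (ZtoC (reduce_pow j D)) _ Hrel); simpl; unfold ZtoC at 1; cring.
Qed.

Fixpoint rescale_coeffs (k : nat) (lam : list Z) (l : nat) : list Z :=
  match lam with
  | nil => nil
  | a :: lam' => (a * c ^ Z.of_nat (k * l))%Z :: rescale_coeffs k lam' (S l)
  end.

Lemma Csum_zcomb_reduce_pow (k : nat) (lam : list Z) (l : nat) :
  Csum (fun i => Cmul (ZtoC (zcomb lam (map (fun t => reduce_pow (k * t)) (seq l (length lam))) i))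
                      (Cpow E i)) (S D)
  = Cmul (Cpow E (k * l)) (peval (rescale_coeffs k lam l) (Cpow E k)).
Proof.
  revert l; induction lam as [|a lam IH]; intros l.
  - simpl; rewrite Csum_zero by (intros; unfold ZtoC; cring); cring.
  - cbn [length seq map zcomb].
    rewrite (Csum_ext _ (fun i => Cadd
        (Cmul (ZtoC (zcomb lam (map (fun t => reduce_pow (k * t)) (seq (S l) (length lam))) i))
              (Cpow E i))
        (Cmul (ZtoC a) (Cmul (ZtoC (reduce_pow (k * l) i)) (Cpow E i)))))
      by (intros; cring).
    rewrite Csum_add_scale, IH, <- reduce_pow_spec.
    cbn [rescale_coeffs peval]; rewrite ZtoC_mul, ZtoC_pow.
    replace (k * S l)%nat with (k * l + k)%nat by lia; rewrite Cpow_add; cring.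
Qed.

End PowersOfAlgebraic.

(* The [D + 2] vectors [reduce_pow (k t)], [t <= D + 1], are dependent; a relation
   among them is a polynomial relation for [E^k]. *)
Lemma Calgebraic_pow (E : CC) (k : nat) : Calgebraic E -> Calgebraic (Cpow E k).
Proof.
  intros [P [HP HPE]].
  destruct (peval_leading_coeff P HP) as [P0 [c [Hc HP0]]]; rewrite HP0 in HPE.
  destruct P0 as [|p0 P0'] eqn:HeqP.
  { exfalso; apply (ZtoC_neq0 c Hc); rewrite <- HPE; simpl; cring. }
  rewrite <- HeqP in *; set (D := length P0').
  assert (HlP : length P0 = S D) by (subst; reflexivity).
  assert (Hrel : Cadd (Csum (fun i => Cmul (ZtoC (nth i P0 0%Z)) (Cpow E i)) (S D))
                      (Cmul (ZtoC c) (Cpow E (S D))) = Czero).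
  { rewrite peval_app, peval_Csum, HlP in HPE; rewrite <- HPE; simpl; cring. }
  set (vs := map (fun t => reduce_pow P0 c D (k * t)) (seq 0 (S (S D)))).
  destruct (zkernel_nontrivial_of_length (S D) vs) as [lam [Hl1 [Hl2 Hl3]]].
  { unfold vs; now rewrite length_map, length_seq. }
  pose proof (Csum_zcomb_reduce_pow P0 c D E Hrel k lam 0) as Hc0.
  unfold vs in Hl1; rewrite length_map, length_seq in Hl1; rewrite Hl1 in Hc0; fold vs in Hc0.
  rewrite Csum_zero, Nat.mul_0_r in Hc0 by (intros i Hi; rewrite Hl3 by lia; unfold ZtoC; cring).
  cbn [Cpow] in Hc0; rewrite Cmul_1_l in Hc0.
  exists (rescale_coeffs c k lam 0); split; [|auto].
  clear - Hl2 Hc; generalize 0%nat; induction Hl2; intros l0; simpl.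
  - apply Exists_cons_hd, Z.neq_mul_0; split; auto; apply Z.pow_nonzero; lia.
  - apply Exists_cons_tl; auto.
Qed.

Fixpoint spread_coeffs (k : nat) (P : list Z) : list Z :=
  match P with nil => nil | c :: P' => c :: (repeat 0%Z k ++ spread_coeffs k P') end.

Lemma peval_spread_coeffs (k : nat) (P : list Z) (x : CC) :
  peval (spread_coeffs k P) x = peval P (Cpow x (S k)).
Proof.
  assert (Hz : forall n, peval (repeat 0%Z n) x = Czero)
    by (induction n; simpl; auto; rewrite IHn; cring).
  induction P as [|c P IH]; simpl; auto.
  rewrite peval_app, Hz, repeat_length, IH; cbn [Cpow]; cring.
Qed.

Lemma Exists_spread_coeffs (k : nat) (P : list Z) :
  Exists (fun c => c <> 0%Z) P -> Exists (fun c => c <> 0%Z) (spread_coeffs k P).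
Proof.
  induction 1; simpl; [now apply Exists_cons_hd|].
  apply Exists_cons_tl, Exists_app; auto.
Qed.

Lemma Calgebraic_of_pow (E : CC) (k : nat) : Calgebraic (Cpow E (S k)) -> Calgebraic E.
Proof.
  intros [P [HP HPE]]; exists (spread_coeffs k P); split.
  - now apply Exists_spread_coeffs.
  - now rewrite peval_spread_coeffs.
Qed.

Lemma peval_rev (P : list Z) (y B : CC) : Cmul B y = Cone ->
  Cmul y (peval (rev P) y) = Cmul (Cpow y (length P)) (peval P B).
Proof.
  intros H; induction P as [|c P IH]; simpl; [cring|].
  rewrite peval_app, length_rev; simpl.
  transitivity (Cadd (Cmul y (peval (rev P) y)) (Cmul (ZtoC c) (Cmul y (Cpow y (length P)))));
    [cring|].
  rewrite IH.
  transitivity (Cadd (Cmul (Cmul (Cpow y (length P)) (peval P B)) (Cmul B y))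
                     (Cmul (ZtoC c) (Cmul y (Cpow y (length P))))); [rewrite H|]; cring.
Qed.

(* [E^(k+1)] is the inverse of [B], a root of the reversed polynomial. *)
Lemma Calgebraic_of_inv_pow (B E : CC) (k : nat) :
  Calgebraic B -> Cmul B (Cpow E (S k)) = Cone -> Calgebraic E.
Proof.
  intros [P [HP HPB]] H; exists (spread_coeffs k (rev P)); split.
  - apply Exists_spread_coeffs; apply Exists_exists in HP as [x [Hx1 Hx2]].
    apply Exists_exists; exists x; split; auto; now apply (in_rev P).
  - rewrite peval_spread_coeffs.
    assert (Hy : Cpow E (S k) <> Czero).
    { intros H0; rewrite H0, Cmul_0_r in H; unfold Czero, Cone, RtoC in H.
      injection H; lra. }
    pose proof (peval_rev P (Cpow E (S k)) B H) as H1.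
    rewrite HPB, Cmul_0_r in H1; apply Cmul_integral in H1 as [H1 | H1]; [contradiction | auto].
Qed.

Lemma INR_Pos_to_nat (q : positive) : INR (Pos.to_nat q) = IZR (Z.pos q).
Proof. now rewrite INR_IZR_INZ, positive_nat_Z. Qed.

(* For [z = p/q], [(w^z)^q = w^p]: take roots or inverse roots of [w^z], then powers. *)
Lemma Calgebraic_of_rational_power (z w Lw : CC) :
  Crational z -> z <> Czero -> Cexp Lw = w -> Calgebraic (Cexp (Cmul z Lw)) -> Calgebraic w.
Proof.
  intros [[p q] ->] Hz0 Hw HB.
  set (al := Cmul (RtoC (/ IZR (Z.pos q))) Lw).
  assert (Hq : IZR (Z.pos q) <> 0) by (apply IZR_neq0; lia).
  assert (HE : Calgebraic (Cexp al)).
  { destruct p as [|p|p].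
    - exfalso; apply Hz0; unfold Q2R; simpl; cring.
    - destruct (Pos.to_nat p) as [|k] eqn:Hk; [lia|].
      apply Calgebraic_of_pow with k; rewrite <- Hk, <- Cexp_INR_mul.
      replace (Cmul (RtoC (INR (Pos.to_nat p))) al) with (Cmul (RtoC (Q2R (Z.pos p # q))) Lw);
        auto.
      unfold al, Q2R; simpl; rewrite INR_Pos_to_nat; cfield; auto.
    - destruct (Pos.to_nat p) as [|k] eqn:Hk; [lia|].
      apply (Calgebraic_of_inv_pow _ _ k HB).
      rewrite <- Hk, <- Cexp_INR_mul, <- Cexp_add, <- Cexp_0; f_equal.
      unfold al, Q2R; simpl; rewrite INR_Pos_to_nat.
      replace (IZR (Z.neg p)) with (- IZR (Z.pos p)) by now rewrite <- opp_IZR.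
      cfield; auto. }
  rewrite <- Hw; replace Lw with (Cmul (RtoC (INR (Pos.to_nat q))) al).
  - rewrite Cexp_INR_mul; now apply Calgebraic_pow.
  - unfold al; rewrite INR_Pos_to_nat; cfield; auto.
Qed.

Lemma algebraic_transcendental_absurd (z w Lz Lw : CC) : Schanuel ->
  Cexp Lz = z -> Cexp Lw = w -> z <> Cone -> w <> Cone ->
  Calgebraic (Cexp (Cmul w Lz)) -> Calgebraic (Cexp (Cmul z Lw)) ->
  Calgebraic z -> Ctranscendental w -> False.
Proof.
  intros HS Hz Hw Hz1 Hw1 HA HB [m [Hm Hmz]] Hwt.
  destruct (classic (Crational z)) as [Hr | Hr].
  - apply Hwt, (Calgebraic_of_rational_power z w Lw); auto.
    rewrite <- Hz; apply Cexp_neq0.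
  - exact (algebraic_irrational_base_absurd z w Lz Lw m HS Hz Hw Hz1 Hw1 Hm Hmz Hr Hwt HA HB).
Qed.

Theorem schanuel_power_dichotomy (z w Lz Lw : CC) : Schanuel ->
  z <> Cone -> w <> Cone -> Cexp Lz = z -> Cexp Lw = w ->
  Calgebraic (Cexp (Cmul w Lz)) -> Calgebraic (Cexp (Cmul z Lw)) ->
  (Crational z /\ Crational w) \/ (Ctranscendental z /\ Ctranscendental w).
Proof.
  intros HS Hz1 Hw1 Hz Hw HA HB.
  destruct (classic (Calgebraic z)) as [Hza | Hza];
    destruct (classic (Calgebraic w)) as [Hwa | Hwa].
  - destruct (classic (Crational z)) as [Hzr | Hzr];
      destruct (classic (Crational w)) as [Hwr | Hwr]; [now left | exfalso..].
    + now apply (gelfond_schneider z w Lz).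
    + now apply (gelfond_schneider w z Lw).
    + now apply (gelfond_schneider w z Lw).
  - exfalso; now apply (algebraic_transcendental_absurd z w Lz Lw).
  - exfalso; now apply (algebraic_transcendental_absurd w z Lw Lz).
  - now right.
Qed.

(** * Rational solutions of [s^t = t^s] *)

Lemma pow_lt_compat_S (a b : R) (n : nat) : 0 <= a < b -> a ^ S n < b ^ S n.
Proof.
  intros H; induction n as [|n IH]; [simpl; lra|].
  change (a ^ S (S n)) with (a * a ^ S n); change (b ^ S (S n)) with (b * b ^ S n).
  assert (0 <= a ^ S n) by (apply pow_le; lra); nra.
Qed.

Lemma exp_pow (x : R) (n : nat) : exp x ^ n = exp (INR n * x).
Proof.
  induction n as [|n IH]; [simpl; now rewrite Rmult_0_l, exp_0|].
  rewrite S_INR; simpl; rewrite IH, <- exp_plus; f_equal; ring.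
Qed.

(* With [x = K/S]: [(S+K)^S = S^S (1+x)^S < S^S e^K <= S^S S^K]. *)
Lemma pow_swap_lt (S K : nat) : (3 <= S)%nat -> (1 <= K)%nat ->
  INR (S + K) ^ S < INR S ^ (S + K).
Proof.
  intros HS HK.
  assert (HS' : INR 3 <= INR S) by (apply le_INR; lia); simpl in HS'.
  assert (HK' : INR 1 <= INR K) by (apply le_INR; lia); simpl in HK'.
  set (x := INR K / INR S).
  assert (Hx : 0 < x) by (unfold x; apply Rdiv_lt_0_compat; lra).
  assert (H1 : INR (S + K) = INR S * (1 + x)) by (unfold x; rewrite plus_INR; field; lra).
  rewrite H1, Rpow_mult_distr, pow_add.
  apply Rmult_lt_compat_l; [apply pow_lt; lra|].
  destruct S as [|S']; [lia|].
  apply Rlt_le_trans with (exp x ^ S (S')).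
  - apply pow_lt_compat_S; split; [lra|]; apply exp_ineq1; lra.
  - rewrite exp_pow; replace (INR (S (S')) * x) with (INR K * 1) by (unfold x; field; lra).
    rewrite <- exp_pow; apply pow_incr; split; [left; apply exp_pos|].
    pose proof exp_le_3; lra.
Qed.

Lemma square_lt_pow2 (T : nat) : (5 <= T)%nat -> (T * T < 2 ^ T)%nat.
Proof.
  induction T as [|T IH]; intros HT; [lia|].
  destruct (Nat.eq_dec T 4) as [-> | HT4]; [simpl; lia|].
  specialize (IH ltac:(lia)); rewrite Nat.pow_succ_r'; nia.
Qed.

Lemma pow_comm_nat (S T : nat) : (1 < S)%nat -> (S < T)%nat -> INR S ^ T = INR T ^ S ->
  S = 2%nat /\ T = 4%nat.
Proof.
  intros HS HT H.
  destruct (le_lt_dec 3 S) as [H3 | H3].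
  - exfalso; replace T with (S + (T - S))%nat in H by lia.
    pose proof (pow_swap_lt S (T - S) H3 ltac:(lia)); lra.
  - assert (S = 2%nat) as -> by lia; split; auto.
    rewrite <- !pow_INR in H; apply INR_eq in H.
    destruct (Nat.eq_dec T 3) as [-> | H3']; [simpl in H; lia|].
    destruct (Nat.eq_dec T 4) as [-> | H4]; auto.
    pose proof (square_lt_pow2 T ltac:(lia)); simpl in H; lia.
Qed.

(* In lowest terms [a'/b'], [b' | a'^c] with [a'], [b'] coprime forces [b' = 1]. *)
Lemma rational_root_of_integer (a b M : Z) (c : nat) : (0 < b)%Z -> (0 < c)%nat ->
  (IZR a / IZR b) ^ c = IZR M -> exists n, IZR a / IZR b = IZR n.
Proof.
  intros Hb Hc H.
  set (g := Z.gcd a b).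
  assert (Hg0 : (0 <= g)%Z) by apply Z.gcd_nonneg.
  assert (Hg1 : g <> 0%Z) by (intros H0; apply Z.gcd_eq_0 in H0; lia).
  assert (Hrp : rel_prime (a / g) (b / g))
    by (apply Zis_gcd_rel_prime; [lia | lia | apply Zgcd_is_gcd]).
  assert (Ha : a = (g * (a / g))%Z) by (apply Zdivide_Zdiv_eq; [lia | apply Z.gcd_divide_l]).
  assert (Hb' : b = (g * (b / g))%Z) by (apply Zdivide_Zdiv_eq; [lia | apply Z.gcd_divide_r]).
  set (a' := (a / g)%Z) in *; set (b' := (b / g)%Z) in *.
  assert (Hb'0 : (0 < b')%Z) by nia.
  assert (Hq : IZR a / IZR b = IZR a' / IZR b').
  { rewrite Ha, Hb' at 1; rewrite !mult_IZR; field; split; apply IZR_neq0; lia. }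
  rewrite Hq in *.
  assert (Hint : (a' ^ Z.of_nat c = M * b' ^ Z.of_nat c)%Z).
  { apply eq_IZR; rewrite <- !pow_IZR, mult_IZR, <- pow_IZR, <- H.
    unfold Rdiv; rewrite Rpow_mult_distr, pow_inv; field.
    apply pow_nonzero, IZR_neq0; lia. }
  destruct c as [|c']; [lia|].
  assert (Hdiv : (b' | a' ^ Z.of_nat (S c'))%Z).
  { exists (M * b' ^ Z.of_nat c')%Z; rewrite Hint, Nat2Z.inj_succ, Z.pow_succ_r by lia; ring. }
  assert (Hrp2 : rel_prime b' (a' ^ Z.of_nat (S c')))
    by (apply rel_prime_Zpower_r; [lia | now apply rel_prime_sym]).
  destruct Hrp2 as [_ _ Hd]; specialize (Hd b' (Z.divide_refl _) Hdiv).
  apply Z.divide_1_r in Hd; assert (b' = 1%Z) as -> by lia.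
  exists a'; field.
Qed.

Lemma Rpower_ratio_pow (x : R) (p d : positive) : 0 < x ->
  Rpower x (IZR (Z.pos p) / IZR (Z.pos d)) ^ Pos.to_nat d = x ^ Pos.to_nat p.
Proof.
  intros Hx.
  rewrite <- Rpower_pow by (unfold Rpower; apply exp_pos).
  rewrite Rpower_mult, INR_Pos_to_nat.
  replace (IZR (Z.pos p) / IZR (Z.pos d) * IZR (Z.pos d)) with (IZR (Z.pos p))
    by (field; apply IZR_neq0; lia).
  rewrite <- INR_Pos_to_nat; now apply Rpower_pow.
Qed.

Lemma Q2R_pos_fraction (q : Q) : 0 < Q2R q -> exists p d, Q2R q = IZR (Z.pos p) / IZR (Z.pos d).
Proof.
  destruct q as [[|p|p] d]; unfold Q2R; simpl; intros H.
  - rewrite Rmult_0_l in H; lra.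
  - now exists p, d.
  - exfalso; assert (0 < / IZR (Z.pos d)) by (apply Rinv_0_lt_compat, IZR_lt; lia).
    assert (IZR (Z.neg p) < 0) by (apply IZR_lt; lia); nra.
Qed.

Lemma Crational_RtoC_pow (q : Q) (k : nat) : Crational (RtoC (Q2R q ^ k)).
Proof.
  induction k as [|k [q' Hq']].
  - exists 1%Q; unfold Q2R; simpl; f_equal; field.
  - exists (q * q')%Q; simpl; rewrite Q2R_mult; apply RtoC_inj in Hq'; now rewrite Hq'.
Qed.

Lemma Rpower_rational_pow (x : R) (q : Q) : 0 < x -> 0 < Q2R q ->
  exists p d : positive, Q2R q = IZR (Z.pos p) / IZR (Z.pos d) /\
                         Rpower x (Q2R q) ^ Pos.to_nat d = x ^ Pos.to_nat p.
Proof.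
  intros Hx Hq; destruct (Q2R_pos_fraction q Hq) as [p [d Hpd]].
  exists p, d; split; auto; rewrite Hpd; now apply Rpower_ratio_pow.
Qed.

Lemma rational_pow_comm_rational_power (s t r : R) : 1 < s -> s < t -> Rpower s t = r ->
  Crational (RtoC t) -> Crational (RtoC s) -> exists n, (1 <= n)%nat /\ Crational (RtoC (r ^ n)).
Proof.
  intros Hs Hst Hr [qt Hqt] [qs Hqs]; apply RtoC_inj in Hqt, Hqs.
  destruct (Rpower_rational_pow s qt) as [p [d [_ Hpow]]]; [lra | lra|].
  exists (Pos.to_nat d); split; [lia|].
  rewrite <- Hr, Hqt, Hpow, Hqs; apply Crational_RtoC_pow.
Qed.

Lemma integer_of_rational_Rpower (x y : R) (N : nat) : 1 < x -> 0 < y ->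
  Crational (RtoC x) -> Crational (RtoC y) -> Rpower x y = INR N ->
  exists n : nat, (1 < n)%nat /\ x = INR n.
Proof.
  intros Hx Hy [qx Hqx] [qy Hqy] Hr; apply RtoC_inj in Hqx, Hqy.
  destruct (Rpower_rational_pow x qy) as [p [d [_ Hpow]]]; [lra | lra|].
  destruct (Q2R_pos_fraction qx) as [a [b Hab]]; [lra|].
  destruct (rational_root_of_integer (Z.pos a) (Z.pos b) (Z.of_nat N ^ Z.of_nat (Pos.to_nat d))
              (Pos.to_nat p)) as [n Hn]; [lia | lia | |].
  - rewrite <- Hab, <- Hqx, <- Hpow, <- Hqy, Hr, INR_IZR_INZ; apply pow_IZR.
  - rewrite <- Hab, <- Hqx in Hn; rewrite Hn in Hx |- *.
    assert (Hn1 : (1 < n)%Z) by (apply lt_IZR; lra).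
    exists (Z.to_nat n); split; [lia|]; now rewrite INR_IZR_INZ, Z2Nat.id by lia.
Qed.

Lemma rational_pow_comm_16 (s t : R) (N : nat) : 1 < s -> s < t ->
  Rpower s t = INR N -> Rpower t s = INR N -> Crational (RtoC s) -> Crational (RtoC t) ->
  N = 16%nat.
Proof.
  intros Hs Hst Hr1 Hr2 Hsr Htr.
  destruct (integer_of_rational_Rpower s t N) as [S [HS ->]]; try lra; auto.
  destruct (integer_of_rational_Rpower t (INR S) N) as [T [HT ->]]; try lra; auto.
  assert (HST : (S < T)%nat) by now apply INR_lt.
  destruct (pow_comm_nat S T HS HST) as [-> ->].
  - rewrite <- !Rpower_pow by (apply lt_0_INR; lia); congruence.
  - apply INR_eq; rewrite <- Hr1, Rpower_pow by (simpl; lra); simpl; ring.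
Qed.

Theorem pow_comm_transcendental (r s t : R) : Schanuel ->
  1 < s -> s < t -> Rpower s t = r -> Rpower t s = r ->
  ((exists N : nat, r = INR N /\ N <> 16%nat) \/
   (forall n : nat, (1 <= n)%nat -> Calgebraic (RtoC (r ^ n)) /\ ~ Crational (RtoC (r ^ n)))) ->
  Ctranscendental (RtoC s) /\ Ctranscendental (RtoC t).
Proof.
  intros HS Hs Hst Hr1 Hr2 Hcase.
  assert (Hra : Calgebraic (RtoC r)).
  { destruct Hcase as [[N [-> _]] | Hc].
    - apply Crational_algebraic.
      replace (INR N) with (IZR (Z.of_nat N) / IZR 1) by (rewrite INR_IZR_INZ; field).
      apply Crational_div; lia.
    - rewrite <- (pow_1 r); apply Hc; lia. }
  assert (Hlog : forall x, 0 < x -> Cexp (RtoC (ln x)) = RtoC x)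
    by (intros x Hx; now rewrite Cexp_RtoC, exp_ln).
  assert (Hpow : forall x y, Cexp (Cmul (RtoC y) (RtoC (ln x))) = RtoC (Rpower x y))
    by (intros x y; now rewrite <- RtoC_mul, Cexp_RtoC).
  destruct (schanuel_power_dichotomy (RtoC s) (RtoC t) (RtoC (ln s)) (RtoC (ln t)) HS)
    as [[Hsr Htr] | Htrans]; auto; try (intros H1; apply RtoC_inj in H1; lra);
    try (rewrite Hpow; congruence); try (apply Hlog; lra).
  exfalso; destruct Hcase as [[N [-> HN]] | Hc].
  - now apply HN, (rational_pow_comm_16 s t).
  - destruct (rational_pow_comm_rational_power s t r) as [n [Hn Hrat]]; auto.
    now apply (Hc n Hn).
Qed.

Theorem mainTheorem1 :
  Schanuel ->
  (forall z w Lz Lw : CC,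
      z <> Czero -> z <> Cone -> w <> Czero -> w <> Cone ->
      Cexp Lz = z -> Cexp Lw = w ->
      Calgebraic (Cexp (Cmul w Lz)) -> Calgebraic (Cexp (Cmul z Lw)) ->
      (Crational z /\ Crational w) \/ (Ctranscendental z /\ Ctranscendental w))
  /\
  (forall r s t : R,
      1 < s -> s < t -> Rpower s t = r -> Rpower t s = r ->
      ((exists N : nat, r = INR N /\ N <> 16%nat) \/
       (forall n : nat, (1 <= n)%nat ->
          Calgebraic (RtoC (r ^ n)) /\ ~ Crational (RtoC (r ^ n)))) ->
      Ctranscendental (RtoC s) /\ Ctranscendental (RtoC t)).
Proof.
  intros HS; split.
  - intros z w Lz Lw _ Hz1 _ Hw1; now apply schanuel_power_dichotomy.
  - intros r s t; now apply pow_comm_transcendental.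
Qed.
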